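(* Let $H>0$, $g>0$, and let $\bar\rho$ be a smooth function on $[-H,0]$ for which there exist constants $c^*,c_*>0$ with $c_*\le \bar\rho\le c^*$ and $-\bar\rho'\ge c_*$ on $[-H,0]$. Let $N^2:=-g\bar\rho'/\bar\rho$, and let $(c_n,f_n)_{n\ge1}$ be the eigen-elements of the Sturm–Liouville problem described in the context. Define the operator $M$ on $\ell^2(\mathbb N^* )$ by $(Mu)_n=\sum_{m\ge1}M_{n,m}u_m$ with $$M_{n,m}:=c_nc_m\int_{-H}^0 f_n(r)f_m(r)\bar\rho(r)\,dr .$$ Then there exists $C>0$ such that: (i) $M$ is a bounded linear operator on $\ell^2(\mathbb N^* )$ and $|Mu|_{\ell^2}\le C\,|(c_nu_n)_n|_{\ell^2}$ for all $u\in\ell^2(\mathbb N^* )$; (ii) $M$ is symmetric: $\langle Mu,v\rangle=\langle u,Mv\rangle$ for all $u,v\in\ell^2(\mathbb N^* )$; (iii) $\langle Mu,u\rangle\ge \frac1C |(c_nu_n)_n|_{\ell^2}^2$ for all $u\in\ell^2(\mathbb N^* )$; (iv) consequently $M$ has a unique positive square root $M^{1/2}$ (i.e. $(M^{1/2})^2=M$), and it satisfies $\frac1C|(c_nu_n)_n|_{\ell^2}\le |M^{1/2}u|_{\ell^2}\le C|(c_nu_n)_n|_{\ell^2}$ for all $u\in\ell^2(\mathbb N^* )$; (v) if $N^2$ is constant (independent of $r$), then $M$ is diagonal with $M_{n,n}=c_n^2/N^2$ and $M_{n,m}=0$ for $n\ne m$.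
   Context: $\ell^2(\mathbb N^* )$ is the space of real square-summable sequences indexed by positive integers, with scalar product $\langle u,v\rangle=\sum_n u_nv_n$. For $n\ge1$, $c_n>0$ and $f_n$ are defined by the Sturm–Liouville eigenvalue problem $(\bar\rho f_n')'=-\bar\rho N^2\frac{1}{c_n^2}f_n$ on $(-H,0)$ with $f_n(-H)=f_n(0)=0$, where $(c_n)_{n\ge1}$ is ordered decreasingly and the family $(f_n)_{n\ge1}$ is normalized to be an orthonormal basis of the weighted space $L^2_{\bar\rho N^2}([-H,0])$ (scalar product $\int_{-H}^0 fg\,\bar\rho N^2$). *)

From Stdlib Require Import Reals.
From Coquelicot Require Import Coquelicot.
Open Scope R_scope.

(** Smoothness: all iterated derivatives exist everywhere (a smooth function on
    [-H,0] is the restriction of such a function, by Seeley/Whitney extension). *)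
Definition smooth (f : R -> R) : Prop :=
  forall (k : nat) (x : R), ex_derive (Derive_n f k) x.

Definition cont_on_cc (a b : R) (h : R -> R) : Prop :=
  forall x, a <= x <= b -> forall eps, 0 < eps ->
    exists delta, 0 < delta /\
      forall y, a <= y <= b -> Rabs (y - x) < delta -> Rabs (h y - h x) < eps.

Definition N2 (g : R) (rho : R -> R) (r : R) : R :=
  - g * Derive rho r / rho r.

Definition weight (g : R) (rho : R -> R) (r : R) : R := rho r * N2 g rho r.

(** (c_n, f_n)_{n>=1} (indexed here by n : nat, index n standing for n+1) are the
    eigen-elements of  (rho f')' = - rho N^2 c^{-2} f  on (-H,0), f(-H)=f(0)=0,
    with (c_n) positive, decreasing, and (f_n) an orthonormal basis of
    L^2_{rho N^2}([-H,0]).  Completeness is expressed by Parseval's identity for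
    every continuous function on [-H,0] (a dense subset of L^2). *)
Definition SL_eigen_family (H g : R) (rho : R -> R)
    (c : nat -> R) (f : nat -> R -> R) : Prop :=
  (forall n, 0 < c n) /\
  (forall n, c (S n) < c n) /\
  (forall n, cont_on_cc (- H) 0 (f n)) /\
  (forall n, f n (- H) = 0 /\ f n 0 = 0) /\
  (forall n x, - H < x < 0 -> ex_derive (f n) x) /\
  (forall n x, - H < x < 0 ->
     is_derive (fun y => rho y * Derive (f n) y) x
               (- (rho x * N2 g rho x * / (c n ^ 2) * f n x))) /\
  (forall n, RInt (fun r => f n r * f n r * weight g rho r) (- H) 0 = 1) /\
  (forall n m, n <> m ->
     RInt (fun r => f n r * f m r * weight g rho r) (- H) 0 = 0) /\
  (forall h : R -> R, cont_on_cc (- H) 0 h ->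
     is_series (fun n => (RInt (fun r => h r * f n r * weight g rho r) (- H) 0) ^ 2)
               (RInt (fun r => h r ^ 2 * weight g rho r) (- H) 0)).

Definition l2 (u : nat -> R) : Prop := ex_series (fun n => u n ^ 2).
Definition l2norm (u : nat -> R) : R := sqrt (Series (fun n => u n ^ 2)).
Definition l2inner (u v : nat -> R) : R := Series (fun n => u n * v n).

Definition cmul (c : nat -> R) (u : nat -> R) : nat -> R := fun n => c n * u n.

Definition Mentry (H : R) (rho : R -> R) (c : nat -> R) (f : nat -> R -> R)
    (n m : nat) : R :=
  c n * c m * RInt (fun r => f n r * f m r * rho r) (- H) 0.

Definition Mop (H : R) (rho : R -> R) (c : nat -> R) (f : nat -> R -> R)
    (u : nat -> R) : nat -> R :=
  fun n => Series (fun m => Mentry H rho c f n m * u m).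

(** Bounded, linear, symmetric, nonnegative ("positive") operator on l^2. *)
Definition pos_bounded_op (S : (nat -> R) -> (nat -> R)) : Prop :=
  (forall u, l2 u -> l2 (S u)) /\
  (forall u v a b, l2 u -> l2 v ->
     S (fun n => a * u n + b * v n) = (fun n => a * S u n + b * S v n)) /\
  (exists K, 0 <= K /\ forall u, l2 u -> l2norm (S u) <= K * l2norm u) /\
  (forall u v, l2 u -> l2 v -> l2inner (S u) v = l2inner u (S v)) /\
  (forall u, l2 u -> 0 <= l2inner (S u) u).

From Stdlib Require Import Reals Lra Psatz Lia List FunctionalExtensionality.
From Coquelicot Require Import Coquelicot.
Open Scope R_scope.

(* The Gram matrix a n m = \int f_n f_m rho is the matrix, in the orthonormal basis (f_n) of
   L^2_{rho N^2}, of multiplication by 1/N^2 = rho / (rho N^2), which lies between two positive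
   constants on [-H, 0]. Parseval's identity therefore bounds the quadratic forms of the finite
   sections of a from above, and orthonormality bounds them from below; so a defines a bounded,
   symmetric, coercive operator A on l^2, and M = D A D with D = diag (c_n).
   A bounded nonnegative symmetric M has the square root sqrt K * sum_k beta_k B^k, where K
   exceeds the norm of M, B = 1 - M / K is a symmetric contraction and beta_k are the
   (absolutely summable) Taylor coefficients of sqrt (1 - x); it is unique because any other
   nonnegative square root commutes with M, hence with it, and two commuting nonnegative
   square roots coincide. Finally, if N^2 is constant then rho is proportional to rho N^2, and
   orthonormality makes M diagonal. *)

(** * Series and the space l^2 *)

Lemma Series_const0 : Series (fun _ => 0) = 0.
Proof.
  rewrite (Series_ext _ (fun _ => 0 * 1)) by (intros; ring).
  rewrite Series_scal_l. ring.
Qed.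

Lemma is_series_partial_sums (a : nat -> R) (l : R) :
  is_series a l <-> is_lim_seq (fun N => sum_f_R0 a N) l.
Proof.
  split; intro H.
  - apply is_lim_seq_ext with (sum_n a); [intro; apply sum_n_Reals | exact H].
  - apply is_lim_seq_ext with (u := fun N => sum_f_R0 a N) (v := sum_n a) in H; [exact H|].
    intro; symmetry; apply sum_n_Reals.
Qed.

Lemma Series_nonneg (a : nat -> R) :
  (forall n, 0 <= a n) -> ex_series a -> 0 <= Series a.
Proof.
  intros Ha Hex. rewrite <- Series_const0.
  apply Series_le; auto. intro; split; [lra | auto].
Qed.

Lemma sum_le_Series (a : nat -> R) N :
  (forall n, 0 <= a n) -> ex_series a -> sum_f_R0 a N <= Series a.
Proof.
  intros Ha Hex. apply sum_incr; auto.
  apply is_lim_seq_Reals, is_series_partial_sums, Series_correct, Hex.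
Qed.

Lemma term_le_Series (a : nat -> R) n :
  (forall n, 0 <= a n) -> ex_series a -> a n <= Series a.
Proof.
  intros Ha Hex. apply Rle_trans with (sum_f_R0 a n); [|apply sum_le_Series; auto].
  destruct n as [|n]; simpl; [lra|].
  pose proof (cond_pos_sum a n Ha). lra.
Qed.

Lemma ex_series_bounded_sums (a : nat -> R) K :
  (forall n, 0 <= a n) -> (forall N, sum_f_R0 a N <= K) ->
  ex_series a /\ Series a <= K.
Proof.
  intros Ha HK.
  assert (Hgrow : Un_growing (fun N => sum_f_R0 a N)).
  { intro n. simpl. specialize (Ha (S n)). lra. }
  assert (Hub : has_ub (fun N => sum_f_R0 a N)) by (exists K; intros x [n ->]; apply HK).
  destruct (growing_cv _ Hgrow Hub) as [l Hl].
  apply is_lim_seq_Reals in Hl.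
  assert (Hs : is_series a l) by (apply is_series_partial_sums; exact Hl).
  split; [exists l; exact Hs|].
  rewrite (is_series_unique a l Hs).
  apply (is_lim_seq_le _ (fun _ => K) l K HK Hl (is_lim_seq_const K)).
Qed.

Lemma Series_finite_support (a : nat -> R) N :
  (forall m, (N < m)%nat -> a m = 0) -> Series a = sum_f_R0 a N.
Proof.
  intro Ha. apply is_series_unique, is_series_partial_sums.
  apply (is_lim_seq_incr_n _ N).
  apply is_lim_seq_ext with (fun _ => sum_f_R0 a N); [|apply is_lim_seq_const].
  intro k. induction k as [|k IH]; simpl; [reflexivity|].
  rewrite Ha by lia. rewrite <- IH. ring.
Qed.

Lemma Rle_of_le_plus_vanishing x y (e : nat -> R) :
  is_lim_seq e 0 -> (forall N, x <= y + e N) -> x <= y.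
Proof.
  intros He H.
  assert (Hl : is_lim_seq (fun N => y + e N) (y + 0))
    by (apply is_lim_seq_plus'; [apply is_lim_seq_const | exact He]).
  pose proof (is_lim_seq_le (fun _ => x) _ x (y + 0) H (is_lim_seq_const x) Hl) as Hle.
  simpl in Hle. lra.
Qed.

Lemma Rabs_vanishing x (e : nat -> R) :
  is_lim_seq e 0 -> (forall N, Rabs x <= e N) -> x = 0.
Proof.
  intros He H.
  assert (Rabs x <= 0)
    by (apply (Rle_of_le_plus_vanishing _ 0 e He); intro N; rewrite Rplus_0_l; auto).
  destruct (Req_dec x 0) as [|Hx]; auto. pose proof (Rabs_pos_lt x Hx). lra.
Qed.

Definition l2sqnorm (u : nat -> R) : R := Series (fun n => u n ^ 2).

Lemma l2_ext u v : (forall n, u n = v n) -> l2 u -> l2 v.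
Proof. intros E Hu. apply (ex_series_ext (fun n => u n ^ 2)); auto. intro; rewrite E; auto. Qed.

Lemma l2_zero : l2 (fun _ => 0).
Proof.
  exists 0. apply (is_series_ext (fun _ => 0)); [intro; simpl; ring|].
  apply is_series_partial_sums.
  apply is_lim_seq_ext with (fun _ => 0); [|apply is_lim_seq_const].
  intro N. induction N as [|N IH]; simpl; lra.
Qed.

Lemma l2_lin a b u v : l2 u -> l2 v -> l2 (fun n => a * u n + b * v n).
Proof.
  intros Hu Hv.
  apply (ex_series_le (V := R_CompleteNormedModule) _
           (fun n => 2 * a ^ 2 * u n ^ 2 + 2 * b ^ 2 * v n ^ 2)).
  - intro n. change norm with Rabs. rewrite Rabs_pos_eq by apply pow2_ge_0.
    pose proof (pow2_ge_0 (a * u n - b * v n)). nra.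
  - apply (ex_series_plus (fun n => 2 * a ^ 2 * u n ^ 2)).
    + apply (ex_series_scal_l (2 * a ^ 2) (fun n => u n ^ 2)), Hu.
    + apply (ex_series_scal_l (2 * b ^ 2) (fun n => v n ^ 2)), Hv.
Qed.

Lemma l2_scal a u : l2 u -> l2 (fun n => a * u n).
Proof.
  intro Hu. apply l2_ext with (fun n => a * u n + 0 * u n); [intro; ring | apply l2_lin; auto].
Qed.

Lemma l2_plus u v : l2 u -> l2 v -> l2 (fun n => u n + v n).
Proof.
  intros. apply l2_ext with (fun n => 1 * u n + 1 * v n); [intro; ring | apply l2_lin; auto].
Qed.

Lemma l2_minus u v : l2 u -> l2 v -> l2 (fun n => u n - v n).
Proof.
  intros. apply l2_ext with (fun n => 1 * u n + (-1) * v n); [intro; ring | apply l2_lin; auto].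
Qed.

Lemma l2_sum (w : nat -> nat -> R) (a : nat -> R) N :
  (forall k, l2 (w k)) -> l2 (fun n => sum_f_R0 (fun k => a k * w k n) N).
Proof.
  intro Hw. induction N as [|N IH]; simpl; [apply l2_scal; auto|].
  apply l2_plus; [exact IH | apply l2_scal; auto].
Qed.

Lemma ex_series_mult_l2 u v : l2 u -> l2 v -> ex_series (fun n => u n * v n).
Proof.
  intros Hu Hv.
  apply (ex_series_le (V := R_CompleteNormedModule) _ (fun n => / 2 * (u n ^ 2 + v n ^ 2))).
  - intro n. change norm with Rabs.
    pose proof (pow2_ge_0 (u n - v n)); pose proof (pow2_ge_0 (u n + v n)).
    apply Rabs_le. split; nra.
  - apply (ex_series_scal_l (/ 2) (fun n => u n ^ 2 + v n ^ 2)).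
    apply (ex_series_plus (fun n => u n ^ 2)); auto.
Qed.

Lemma l2inner_comm u v : l2inner u v = l2inner v u.
Proof. apply Series_ext. intro; ring. Qed.

Lemma l2inner_lin_l a b u v w : l2 u -> l2 v -> l2 w ->
  l2inner (fun n => a * u n + b * v n) w = a * l2inner u w + b * l2inner v w.
Proof.
  intros Hu Hv Hw. unfold l2inner.
  rewrite (Series_ext _ (fun n => a * (u n * w n) + b * (v n * w n))) by (intro; ring).
  rewrite Series_plus, !Series_scal_l; auto.
  - apply (ex_series_scal_l a (fun n => u n * w n)), ex_series_mult_l2; auto.
  - apply (ex_series_scal_l b (fun n => v n * w n)), ex_series_mult_l2; auto.
Qed.

Lemma l2inner_lin_r a b u v w : l2 u -> l2 v -> l2 w ->
  l2inner w (fun n => a * u n + b * v n) = a * l2inner w u + b * l2inner w v.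
Proof.
  intros. rewrite l2inner_comm, l2inner_lin_l by auto.
  rewrite (l2inner_comm u), (l2inner_comm v). reflexivity.
Qed.

Lemma l2inner_0_r u : l2inner u (fun _ => 0) = 0.
Proof.
  unfold l2inner. rewrite (Series_ext _ (fun _ => 0)) by (intro; ring). apply Series_const0.
Qed.

Lemma l2inner_scal_l a u v : l2inner (fun n => a * u n) v = a * l2inner u v.
Proof.
  unfold l2inner. rewrite <- Series_scal_l. apply Series_ext. intro; ring.
Qed.

Lemma l2inner_scal_r a u v : l2inner v (fun n => a * u n) = a * l2inner v u.
Proof. rewrite l2inner_comm, l2inner_scal_l, l2inner_comm. reflexivity. Qed.

Lemma l2inner_plus_l u w v : l2 u -> l2 w -> l2 v ->
  l2inner (fun n => u n + w n) v = l2inner u v + l2inner w v.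
Proof.
  intros Hu Hw Hv. unfold l2inner.
  rewrite <- Series_plus by (apply ex_series_mult_l2; auto).
  apply Series_ext. intro; ring.
Qed.

Lemma l2inner_minus_l u w v : l2 u -> l2 w -> l2 v ->
  l2inner (fun n => u n - w n) v = l2inner u v - l2inner w v.
Proof.
  intros Hu Hw Hv. unfold l2inner.
  rewrite <- Series_minus by (apply ex_series_mult_l2; auto).
  apply Series_ext. intro; ring.
Qed.

Lemma l2inner_minus_r u w v : l2 u -> l2 w -> l2 v ->
  l2inner v (fun n => u n - w n) = l2inner v u - l2inner v w.
Proof.
  intros. rewrite l2inner_comm, l2inner_minus_l by auto.
  rewrite (l2inner_comm u), (l2inner_comm w). reflexivity.
Qed.

Lemma l2inner_sum_l (w : nat -> nat -> R) (a : nat -> R) v N :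
  (forall k, l2 (w k)) -> l2 v ->
  l2inner (fun n => sum_f_R0 (fun k => a k * w k n) N) v
  = sum_f_R0 (fun k => a k * l2inner (w k) v) N.
Proof.
  intros Hw Hv. induction N as [|N IH]; simpl; [apply l2inner_scal_l|].
  rewrite l2inner_plus_l, l2inner_scal_l, IH; auto.
  - apply l2_sum; auto.
  - apply l2_scal; auto.
Qed.

Lemma l2sqnorm_l2inner u : l2sqnorm u = l2inner u u.
Proof. apply Series_ext. intro; ring. Qed.

Lemma l2sqnorm_ge0 u : l2 u -> 0 <= l2sqnorm u.
Proof. intro Hu. apply Series_nonneg; auto. intro; apply pow2_ge_0. Qed.

Lemma l2sqnorm_lin a b u v : l2 u -> l2 v ->
  l2sqnorm (fun n => a * u n + b * v n)
  = a ^ 2 * l2sqnorm u + 2 * a * b * l2inner u v + b ^ 2 * l2sqnorm v.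
Proof.
  intros Hu Hv.
  rewrite !l2sqnorm_l2inner, l2inner_lin_l, !l2inner_lin_r by (try apply l2_lin; auto).
  rewrite (l2inner_comm v u). ring.
Qed.

Lemma l2sqnorm_eq0 w : l2 w -> l2sqnorm w = 0 -> forall n, w n = 0.
Proof.
  intros Hw H0 n.
  assert (w n ^ 2 <= 0).
  { rewrite <- H0. apply (term_le_Series (fun n => w n ^ 2)); auto. intro; apply pow2_ge_0. }
  nra.
Qed.

Lemma l2norm_ge0 u : 0 <= l2norm u.
Proof. apply sqrt_pos. Qed.

Lemma l2norm_sqr u : l2 u -> l2norm u ^ 2 = l2sqnorm u.
Proof. intro Hu. apply pow2_sqrt, l2sqnorm_ge0, Hu. Qed.

Lemma l2norm_ext u v : (forall n, u n = v n) -> l2norm u = l2norm v.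
Proof. intro E. unfold l2norm. f_equal. apply Series_ext. intro; rewrite E; auto. Qed.

Lemma l2norm_zero : l2norm (fun _ => 0) = 0.
Proof.
  unfold l2norm. rewrite (Series_ext _ (fun _ => 0)) by (intro; simpl; ring).
  rewrite Series_const0. apply sqrt_0.
Qed.

Lemma l2norm_eq0 w : l2 w -> l2norm w = 0 -> forall n, w n = 0.
Proof. intros Hw H. apply l2sqnorm_eq0; auto. rewrite <- l2norm_sqr, H by auto. ring. Qed.

Lemma l2norm_vanishing w (e : nat -> R) :
  l2 w -> is_lim_seq e 0 -> (forall N, l2norm w <= e N) -> forall n, w n = 0.
Proof.
  intros Hw He H. apply l2norm_eq0; auto.
  assert (l2norm w <= 0)
    by (apply (Rle_of_le_plus_vanishing _ 0 e He); intro N; rewrite Rplus_0_l; auto).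
  pose proof (l2norm_ge0 w). lra.
Qed.

Lemma sqrt_le_of_le_sqr x y : 0 <= y -> x <= y ^ 2 -> sqrt x <= y.
Proof. intros Hy H. rewrite <- (sqrt_pow2 y Hy). apply sqrt_le_1_alt, H. Qed.

Lemma Rabs_coord_le_l2norm u n : l2 u -> Rabs (u n) <= l2norm u.
Proof.
  intro Hu. unfold l2norm. rewrite <- (sqrt_pow2 (Rabs (u n))) by apply Rabs_pos.
  apply sqrt_le_1_alt.
  rewrite pow2_abs. apply (term_le_Series (fun n => u n ^ 2)); auto. intro; apply pow2_ge_0.
Qed.

Lemma l2_pointwise_limit (w : nat -> nat -> R) (v : nat -> R) K :
  (forall n, is_lim_seq (fun N => w N n) (v n)) ->
  (forall N P, sum_f_R0 (fun n => w N n ^ 2) P <= K) -> l2 v /\ l2sqnorm v <= K.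
Proof.
  intros Hlim HK. apply ex_series_bounded_sums; [intro; apply pow2_ge_0|]. intro P.
  apply (is_lim_seq_le _ (fun _ => K) (sum_f_R0 (fun n => v n ^ 2) P) K (fun N => HK N P));
    [|apply is_lim_seq_const].
  induction P as [|P IH]; simpl; [|apply is_lim_seq_plus'; [exact IH|]];
    apply is_lim_seq_mult'; auto; apply is_lim_seq_mult'; auto; apply is_lim_seq_const.
Qed.

Lemma l2norm_pointwise_limit (w : nat -> nat -> R) (v : nat -> R) K : 0 <= K ->
  (forall n, is_lim_seq (fun N => w N n) (v n)) ->
  (forall N, l2 (w N) /\ l2norm (w N) <= K) -> l2 v /\ l2norm v <= K.
Proof.
  intros HK0 Hlim HK.
  destruct (l2_pointwise_limit w v (K ^ 2) Hlim) as [Hv Hle].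
  - intros N P. destruct (HK N) as [HwN HKN].
    apply Rle_trans with (l2sqnorm (w N)).
    + apply (sum_le_Series (fun n => w N n ^ 2)); auto. intro; apply pow2_ge_0.
    + rewrite <- l2norm_sqr by auto. pose proof (l2norm_ge0 (w N)). nra.
  - split; auto. apply sqrt_le_of_le_sqr; auto.
Qed.

(** * Operators on l^2 *)

Definition op := (nat -> R) -> nat -> R.
Definition l2_op (T : op) := forall u, l2 u -> l2 (T u).
Definition lin_op (T : op) := forall u v a b, l2 u -> l2 v ->
  T (fun n => a * u n + b * v n) = (fun n => a * T u n + b * T v n).
Definition bounded_op (T : op) (K : R) := forall u, l2 u -> l2norm (T u) <= K * l2norm u.
Definition sym_op (T : op) := forall u v, l2 u -> l2 v -> l2inner (T u) v = l2inner u (T v).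
Definition pos_op (T : op) := forall u, l2 u -> 0 <= l2inner (T u) u.

Section LinearOperator.
Variable T : op.
Hypothesis Tlin : lin_op T.

Lemma lin_op_scal a u : l2 u -> T (fun n => a * u n) = (fun n => a * T u n).
Proof.
  intro Hu. replace (fun n => a * u n) with (fun n => a * u n + 0 * u n)
    by (apply functional_extensionality; intro; ring).
  rewrite Tlin by auto. apply functional_extensionality; intro; ring.
Qed.

Lemma lin_op_plus u v : l2 u -> l2 v -> T (fun n => u n + v n) = (fun n => T u n + T v n).
Proof.
  intros Hu Hv. replace (fun n => u n + v n) with (fun n => 1 * u n + 1 * v n)
    by (apply functional_extensionality; intro; ring).
  rewrite Tlin by auto. apply functional_extensionality; intro; ring.
Qed.

Lemma lin_op_minus u v : l2 u -> l2 v -> T (fun n => u n - v n) = (fun n => T u n - T v n).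
Proof.
  intros Hu Hv. replace (fun n => u n - v n) with (fun n => 1 * u n + (-1) * v n)
    by (apply functional_extensionality; intro; ring).
  rewrite Tlin by auto. apply functional_extensionality; intro; ring.
Qed.

Lemma lin_op_zero : T (fun _ => 0) = (fun _ => 0).
Proof.
  replace (fun _ : nat => 0) with (fun n : nat => 0 * (fun _ => 0) n)
    by (apply functional_extensionality; intro; ring).
  rewrite lin_op_scal by apply l2_zero. apply functional_extensionality; intro; ring.
Qed.

Lemma lin_op_sum (w : nat -> nat -> R) (a : nat -> R) N : (forall k, l2 (w k)) ->
  T (fun n => sum_f_R0 (fun k => a k * w k n) N)
  = (fun n => sum_f_R0 (fun k => a k * T (w k) n) N).
Proof.
  intro Hw. induction N as [|N IH]; simpl; [apply lin_op_scal; auto|].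
  rewrite lin_op_plus, IH, lin_op_scal; auto. apply l2_sum; auto. apply l2_scal; auto.
Qed.

End LinearOperator.

Lemma quadratic_nonneg_discr a b c :
  (forall t, 0 <= a - 2 * b * t + c * t ^ 2) -> 0 <= c -> b ^ 2 <= a * c.
Proof.
  intros H Hc. destruct (Rle_lt_or_eq_dec 0 c Hc) as [Hc'|<-].
  - specialize (H (b / c)).
    replace (a - 2 * b * (b / c) + c * (b / c) ^ 2) with ((a * c - b ^ 2) / c) in H
      by (field; lra).
    assert (0 <= a * c - b ^ 2); [|lra].
    apply Rmult_le_reg_r with (/ c); [apply Rinv_0_lt_compat; auto|].
    rewrite Rmult_0_l. exact H.
  - destruct (Req_dec b 0) as [->|Hb]; [specialize (H 0); simpl in H; nra|].
    specialize (H ((a + 1) / (2 * b))).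
    replace (a - 2 * b * ((a + 1) / (2 * b)) + 0 * ((a + 1) / (2 * b)) ^ 2) with (-1) in H
      by (field; auto).
    lra.
Qed.

Section PositiveOperator.
Variable P : op.
Hypotheses (Pl2 : l2_op P) (Plin : lin_op P) (Psym : sym_op P) (Ppos : pos_op P).

Lemma pos_op_cauchy_schwarz x y : l2 x -> l2 y ->
  l2inner (P x) y ^ 2 <= l2inner (P x) x * l2inner (P y) y.
Proof.
  intros Hx Hy. apply quadratic_nonneg_discr; [|apply Ppos; auto].
  intro t. pose proof (Ppos _ (l2_lin 1 (- t) x y Hx Hy)) as H.
  rewrite Plin, l2inner_lin_l, !l2inner_lin_r in H by (try apply l2_lin; auto).
  rewrite (Psym y x), (l2inner_comm y (P x)) in H by auto.
  lra.
Qed.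

Lemma pos_op_eq0 y : l2 y -> l2inner (P y) y = 0 -> P y = (fun _ => 0).
Proof.
  intros Hy H0. apply functional_extensionality, l2sqnorm_eq0; [apply Pl2; auto|].
  pose proof (pos_op_cauchy_schwarz y (P y) Hy (Pl2 _ Hy)) as H.
  rewrite H0, Rmult_0_l in H. rewrite l2sqnorm_l2inner. nra.
Qed.

End PositiveOperator.

Lemma l2inner_cauchy_schwarz u v : l2 u -> l2 v ->
  l2inner u v ^ 2 <= l2sqnorm u * l2sqnorm v.
Proof.
  intros Hu Hv. rewrite !l2sqnorm_l2inner.
  apply (pos_op_cauchy_schwarz (fun w => w)); auto.
  - intros w Hw; exact Hw.
  - intros w w' a b _ _; reflexivity.
  - intros w w' _ _; reflexivity.
  - intros w Hw. rewrite <- l2sqnorm_l2inner. apply l2sqnorm_ge0, Hw.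
Qed.

Lemma Rabs_l2inner_le u v : l2 u -> l2 v -> Rabs (l2inner u v) <= l2norm u * l2norm v.
Proof.
  intros Hu Hv. pose proof (l2norm_ge0 u). pose proof (l2norm_ge0 v).
  apply Rsqr_incr_0_var; [|apply Rmult_le_pos; auto].
  rewrite <- Rsqr_abs, !Rsqr_pow2, Rpow_mult_distr, !l2norm_sqr by auto.
  apply l2inner_cauchy_schwarz; auto.
Qed.

Lemma l2norm_lin_le a b u v : l2 u -> l2 v ->
  l2norm (fun n => a * u n + b * v n) <= Rabs a * l2norm u + Rabs b * l2norm v.
Proof.
  intros Hu Hv. pose proof (l2norm_ge0 u). pose proof (l2norm_ge0 v).
  pose proof (Rabs_pos a). pose proof (Rabs_pos b).
  apply sqrt_le_of_le_sqr; [nra|]. fold (l2sqnorm (fun n => a * u n + b * v n)).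
  rewrite l2sqnorm_lin, <- !l2norm_sqr by auto. rewrite <- (pow2_abs a), <- (pow2_abs b).
  assert (2 * a * b * l2inner u v <= 2 * Rabs a * Rabs b * (l2norm u * l2norm v)).
  { apply Rle_trans with (Rabs (2 * a * b * l2inner u v)); [apply Rle_abs|].
    rewrite !Rabs_mult, (Rabs_pos_eq 2) by lra.
    apply Rmult_le_compat_l; [nra | apply Rabs_l2inner_le; auto]. }
  nra.
Qed.

Lemma l2inner_op_le (T : op) K u : l2_op T -> bounded_op T K -> l2 u ->
  l2inner (T u) u <= K * l2sqnorm u.
Proof.
  intros Tl2 TK Hu. pose proof (TK u Hu). pose proof (l2norm_ge0 u).
  apply Rle_trans with (Rabs (l2inner (T u) u)); [apply Rle_abs|].
  apply Rle_trans with (l2norm (T u) * l2norm u); [apply Rabs_l2inner_le; auto|].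
  rewrite <- l2norm_sqr by auto. nra.
Qed.

Lemma l2norm_plus_le u v : l2 u -> l2 v ->
  l2norm (fun n => u n + v n) <= l2norm u + l2norm v.
Proof.
  intros Hu Hv. rewrite (l2norm_ext _ (fun n => 1 * u n + 1 * v n)) by (intro; ring).
  eapply Rle_trans; [apply l2norm_lin_le; auto|]. rewrite Rabs_R1. lra.
Qed.

Lemma l2norm_minus_le u v : l2 u -> l2 v ->
  l2norm (fun n => u n - v n) <= l2norm u + l2norm v.
Proof.
  intros Hu Hv. rewrite (l2norm_ext _ (fun n => 1 * u n + (-1) * v n)) by (intro; ring).
  eapply Rle_trans; [apply l2norm_lin_le; auto|]. rewrite Rabs_R1, Rabs_m1. lra.
Qed.

(** * The binomial series of sqrt (1 - x) *)

(* Taylor coefficients of sqrt (1 - x). *)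
Fixpoint sqrt1m_coef (k : nat) : R :=
  match k with
  | O => 1
  | S j => sqrt1m_coef j * (INR j - / 2) / (INR j + 1)
  end.

Definition sqrt1m_psum (N : nat) : R := sum_f_R0 sqrt1m_coef N.

Lemma sqrt1m_coef_S k :
  sqrt1m_coef (S k) = sqrt1m_coef k * (INR k - / 2) / (INR k + 1).
Proof. reflexivity. Qed.

Lemma sqrt1m_psum_0 : sqrt1m_psum 0 = 1.
Proof. reflexivity. Qed.

Lemma sqrt1m_psum_eq N : sqrt1m_psum N = - 2 * (INR N + 1) * sqrt1m_coef (S N).
Proof.
  unfold sqrt1m_psum. induction N as [|N IH]; [simpl; field|].
  rewrite tech5, IH, (sqrt1m_coef_S (S N)), !S_INR.
  pose proof (pos_INR N). field. lra.
Qed.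

Lemma sqrt1m_psum_S N :
  sqrt1m_psum (S N) = sqrt1m_psum N * (2 * INR N + 1) / (2 * INR N + 2).
Proof.
  rewrite !sqrt1m_psum_eq, (sqrt1m_coef_S (S N)), !S_INR.
  pose proof (pos_INR N). field. lra.
Qed.

Lemma sqrt1m_psum_pos N : 0 < sqrt1m_psum N.
Proof.
  induction N as [|N IH]; [rewrite sqrt1m_psum_0; lra|].
  rewrite sqrt1m_psum_S. pose proof (pos_INR N).
  apply Rdiv_lt_0_compat; [apply Rmult_lt_0_compat|]; lra.
Qed.

Lemma sqrt1m_psum_decr N : sqrt1m_psum (S N) <= sqrt1m_psum N.
Proof.
  rewrite sqrt1m_psum_S. pose proof (sqrt1m_psum_pos N). pose proof (pos_INR N).
  apply Rmult_le_reg_r with (2 * INR N + 2); [lra|].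
  unfold Rdiv. rewrite Rmult_assoc, Rinv_l by lra. nra.
Qed.

Lemma sqrt1m_psum_le1 N : sqrt1m_psum N <= 1.
Proof.
  induction N as [|N IH]; [rewrite sqrt1m_psum_0; lra|].
  pose proof (sqrt1m_psum_decr N). lra.
Qed.

Lemma sqrt1m_psum_sqr_bound N : sqrt1m_psum N ^ 2 * (2 * INR N + 1) <= 1.
Proof.
  induction N as [|N IH]; [rewrite sqrt1m_psum_0; simpl; lra|].
  rewrite sqrt1m_psum_S, S_INR. pose proof (pos_INR N).
  set (x := INR N) in *. set (g := sqrt1m_psum N) in *.
  replace ((g * (2 * x + 1) / (2 * x + 2)) ^ 2 * (2 * (x + 1) + 1))
    with (g ^ 2 * (2 * x + 1) * ((2 * x + 1) * (2 * x + 3) / (2 * x + 2) ^ 2))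
    by (field; lra).
  assert (0 <= (2 * x + 1) * (2 * x + 3) / (2 * x + 2) ^ 2 <= 1).
  { split; [apply Rdiv_le_0_compat; nra|].
    apply Rmult_le_reg_r with ((2 * x + 2) ^ 2); [nra|].
    unfold Rdiv. rewrite Rmult_assoc, Rinv_l by nra. nra. }
  pose proof (pow2_ge_0 g). nra.
Qed.

Lemma sqrt1m_psum_lim0 : is_lim_seq sqrt1m_psum 0.
Proof.
  apply is_lim_seq_spec. intro eps. pose proof (cond_pos eps).
  destruct (archimed_cor1 (eps ^ 2)) as [N [HN HN0]]; [nra|].
  exists N. intros n Hn. rewrite Rminus_0_r.
  pose proof (sqrt1m_psum_pos n). rewrite Rabs_pos_eq by lra.
  pose proof (sqrt1m_psum_sqr_bound n).
  assert (INR N <= INR n) by (apply le_INR; lia).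
  assert (0 < INR N) by (apply lt_0_INR; lia).
  assert (sqrt1m_psum n ^ 2 < eps ^ 2).
  { apply Rle_lt_trans with (/ INR N); auto.
    apply Rmult_le_reg_r with (INR N); auto. rewrite Rinv_l by lra. nra. }
  nra.
Qed.

Lemma is_lim_seq_scal_sqrt1m_psum k : is_lim_seq (fun N => k * sqrt1m_psum N) 0.
Proof.
  replace (Finite 0) with (Rbar_mult k 0) by (simpl; f_equal; ring).
  apply is_lim_seq_scal_l, sqrt1m_psum_lim0.
Qed.

Lemma sqrt1m_coef_nonpos k : (1 <= k)%nat -> sqrt1m_coef k <= 0.
Proof.
  induction 1 as [|m Hm IH]; [simpl; lra|].
  rewrite sqrt1m_coef_S. assert (1 <= INR m) by (apply (le_INR 1); auto).
  assert (0 < (INR m - / 2) / (INR m + 1)) by (apply Rdiv_lt_0_compat; lra).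
  unfold Rdiv in *. rewrite Rmult_assoc. nra.
Qed.

Lemma Rabs_sqrt1m_coef_S k :
  Rabs (sqrt1m_coef (S k)) = sqrt1m_psum k - sqrt1m_psum (S k).
Proof.
  rewrite Rabs_left1 by (apply sqrt1m_coef_nonpos; lia).
  unfold sqrt1m_psum. rewrite tech5. ring.
Qed.

Lemma ex_series_Rabs_sqrt1m_coef : ex_series (fun k => Rabs (sqrt1m_coef k)).
Proof.
  assert (Hsum : forall N, sum_f_R0 (fun k => Rabs (sqrt1m_coef k)) N = 2 - sqrt1m_psum N).
  { induction N as [|N IH]; [simpl; rewrite Rabs_R1, sqrt1m_psum_0; ring|].
    rewrite tech5, IH, Rabs_sqrt1m_coef_S. ring. }
  exists 2. apply is_series_partial_sums.
  apply is_lim_seq_ext with (fun N => 2 + -1 * sqrt1m_psum N); [intro; rewrite Hsum; ring|].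
  replace (Finite 2) with (Rbar_plus 2 0) by (simpl; f_equal; ring).
  apply is_lim_seq_plus'; [apply is_lim_seq_const | apply is_lim_seq_scal_sqrt1m_psum].
Qed.

(* The Cauchy square p of the coefficients is 1, -1, 0, 0, ... (as (sqrt (1 - x))^2 = 1 - x);
   this follows from the recursion (n + 1) p (n + 1) = (n - 1) p n. *)
Definition sqrt1m_conv (n : nat) : R :=
  sum_f_R0 (fun i => sqrt1m_coef i * sqrt1m_coef (n - i)) n.

Definition sqrt1m_wconv (n : nat) : R :=
  sum_f_R0 (fun i => INR i * sqrt1m_coef i * sqrt1m_coef (n - i)) n.

Lemma sqrt1m_wconv_sym n : 2 * sqrt1m_wconv n = INR n * sqrt1m_conv n.
Proof.
  unfold sqrt1m_wconv, sqrt1m_conv.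
  assert (Hrev : sum_f_R0 (fun i => INR i * sqrt1m_coef i * sqrt1m_coef (n - i)) n
               = sum_f_R0 (fun i => (INR n - INR i) * sqrt1m_coef i * sqrt1m_coef (n - i)) n).
  { rewrite <- sum_f_R0_skip. apply sum_eq. intros i Hi.
    replace (n - (n - i))%nat with i by lia. rewrite minus_INR by lia. ring. }
  transitivity (sum_f_R0 (fun i => INR i * sqrt1m_coef i * sqrt1m_coef (n - i)) n
    + sum_f_R0 (fun i => (INR n - INR i) * sqrt1m_coef i * sqrt1m_coef (n - i)) n);
    [rewrite <- Hrev; ring|].
  rewrite <- plus_sum, scal_sum. apply sum_eq. intros; ring.
Qed.

Lemma sqrt1m_wconv_S n : sqrt1m_wconv (S n) = sqrt1m_wconv n - / 2 * sqrt1m_conv n.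
Proof.
  unfold sqrt1m_wconv, sqrt1m_conv. rewrite decomp_sum by lia. simpl pred.
  rewrite !Rmult_0_l, Rplus_0_l, scal_sum, <- minus_sum. apply sum_eq. intros i Hi.
  replace (S n - S i)%nat with (n - i)%nat by lia.
  rewrite S_INR, sqrt1m_coef_S. pose proof (pos_INR i). field. lra.
Qed.

Lemma sqrt1m_conv_S n : (INR n + 1) * sqrt1m_conv (S n) = (INR n - 1) * sqrt1m_conv n.
Proof.
  pose proof (sqrt1m_wconv_sym (S n)) as HS. pose proof (sqrt1m_wconv_sym n).
  rewrite sqrt1m_wconv_S, S_INR in HS. lra.
Qed.

Lemma sqrt1m_conv_0 : sqrt1m_conv 0 = 1.
Proof. unfold sqrt1m_conv. simpl. ring. Qed.

Lemma sqrt1m_conv_1 : sqrt1m_conv 1 = -1.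
Proof. unfold sqrt1m_conv. simpl. field. Qed.

Lemma sqrt1m_conv_ge2 n : (2 <= n)%nat -> sqrt1m_conv n = 0.
Proof.
  induction 1 as [|m Hm IH].
  - pose proof (sqrt1m_conv_S 1) as H. rewrite sqrt1m_conv_1 in H. simpl INR in H. lra.
  - pose proof (sqrt1m_conv_S m) as H. rewrite IH in H. pose proof (pos_INR m).
    apply Rmult_eq_reg_l with (INR m + 1); lra.
Qed.

(* Polynomials are lists of coefficients, constant term first. *)
Fixpoint padd (p q : list R) : list R :=
  match p, q with
  | nil, _ => q
  | _, nil => p
  | a :: p', b :: q' => (a + b) :: padd p' q'
  end.

Definition pscal (a : R) (p : list R) : list R := map (fun x => a * x) p.

Fixpoint pmul (p q : list R) : list R :=
  match p with
  | nil => nil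
  | a :: p' => padd (pscal a q) (0 :: pmul p' q)
  end.

Definition peval1 (p : list R) : R := fold_right Rplus 0 p.

Definition pnorm1 (p : list R) : R := fold_right (fun a s => Rabs a + s) 0 p.

Lemma nth_padd p q n : nth n (padd p q) 0 = nth n p 0 + nth n q 0.
Proof.
  revert q n. induction p as [|a p IH]; intros [|b q] n; simpl; try (destruct n; simpl; ring).
  destruct n; simpl; [ring | apply IH].
Qed.

Lemma nth_pscal a p n : nth n (pscal a p) 0 = a * nth n p 0.
Proof. revert n. induction p as [|b p IH]; intros [|n]; simpl; try ring. apply IH. Qed.

Lemma nth_pmul p q n :
  nth n (pmul p q) 0 = sum_f_R0 (fun i => nth i p 0 * nth (n - i) q 0) n.
Proof.
  revert n. induction p as [|a p IH]; intro n; simpl.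
  - rewrite (sum_eq _ (fun _ => 0)) by (intros [|i] _; simpl; ring).
    rewrite sum_cte. destruct n; simpl; ring.
  - rewrite nth_padd, nth_pscal. destruct n as [|n]; [simpl; ring|].
    simpl nth at 2. rewrite IH, (decomp_sum _ (S n)) by lia. reflexivity.
Qed.

Lemma peval1_padd p q : peval1 (padd p q) = peval1 p + peval1 q.
Proof.
  revert q. induction p as [|a p IH]; intros [|b q]; simpl; try ring. rewrite IH. ring.
Qed.

Lemma peval1_pscal a p : peval1 (pscal a p) = a * peval1 p.
Proof. induction p as [|b p IH]; simpl; [ring|]. rewrite IH. ring. Qed.

Lemma peval1_pmul p q : peval1 (pmul p q) = peval1 p * peval1 q.
Proof.
  induction p as [|a p IH]; simpl; [ring|].
  rewrite peval1_padd, peval1_pscal. simpl. rewrite IH. ring.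
Qed.

Lemma pnorm1_nonneg_coefs p : (forall k, 0 <= nth k p 0) -> pnorm1 p = peval1 p.
Proof.
  induction p as [|a p IH]; intro H; simpl; [reflexivity|].
  rewrite IH, Rabs_pos_eq; [reflexivity | apply (H 0%nat) | intro k; apply (H (S k))].
Qed.

Lemma nth_map_seq (h : nat -> R) j L i :
  nth i (map h (seq j L)) 0 = if (i <? L)%nat then h (j + i)%nat else 0.
Proof.
  revert j i. induction L as [|L IH]; intros j [|i]; simpl; auto.
  - rewrite Nat.add_0_r. reflexivity.
  - rewrite IH, Nat.add_succ_r. reflexivity.
Qed.

Lemma peval1_map_seq (h : nat -> R) j N :
  peval1 (map h (seq j (S N))) = sum_f_R0 (fun k => h (j + k)%nat) N.
Proof.
  revert j. induction N as [|N IH]; intro j; [simpl; rewrite Nat.add_0_r; ring|].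
  change (h j + peval1 (map h (seq (S j) (S N))) = sum_f_R0 (fun k => h (j + k)%nat) (S N)).
  rewrite IH, (decomp_sum (fun k => h (j + k)%nat) (S N)) by lia. simpl pred.
  rewrite Nat.add_0_r. f_equal. apply sum_eq. intros. rewrite Nat.add_succ_r. reflexivity.
Qed.

Definition sqrt1m_trunc (N : nat) : list R := map sqrt1m_coef (seq 0 (S N)).

Lemma nth_sqrt1m_trunc N i :
  nth i (sqrt1m_trunc N) 0 = if (i <=? N)%nat then sqrt1m_coef i else 0.
Proof. unfold sqrt1m_trunc. rewrite nth_map_seq. reflexivity. Qed.

(* Up to degree N the square of the truncation has the coefficients 1, -1, 0, ... of 1 - x;
   every coefficient of higher degree is a sum of products of two nonpositive ones. *)
Lemma sqrt1m_trunc_sqr N : (1 <= N)%nat ->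
  exists r, pmul (sqrt1m_trunc N) (sqrt1m_trunc N) = 1 :: -1 :: r /\
            pnorm1 r = sqrt1m_psum N ^ 2.
Proof.
  intro HN. set (s := sqrt1m_trunc N).
  assert (Hlow : forall n, (n <= N)%nat -> nth n (pmul s s) 0 = sqrt1m_conv n).
  { intros n Hn. rewrite nth_pmul. apply sum_eq. intros i Hi. unfold s.
    rewrite !nth_sqrt1m_trunc, !(proj2 (Nat.leb_le _ _)) by lia. reflexivity. }
  assert (Hhigh : forall n, (N < n)%nat -> 0 <= nth n (pmul s s) 0).
  { intros n Hn. rewrite nth_pmul. apply cond_pos_sum. intro i. unfold s.
    rewrite !nth_sqrt1m_trunc.
    destruct (Nat.leb_spec i N); [|lra]. destruct (Nat.leb_spec (n - i) N); [|lra].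
    pose proof (sqrt1m_coef_nonpos i ltac:(lia)).
    pose proof (sqrt1m_coef_nonpos (n - i) ltac:(lia)). nra. }
  assert (Hval : peval1 (pmul s s) = sqrt1m_psum N ^ 2).
  { rewrite peval1_pmul. unfold s, sqrt1m_trunc. rewrite peval1_map_seq.
    change (sum_f_R0 (fun k => sqrt1m_coef (0 + k)%nat) N) with (sqrt1m_psum N). ring. }
  pose proof (Hlow 0%nat ltac:(lia)) as H0. pose proof (Hlow 1%nat HN) as H1.
  rewrite sqrt1m_conv_0 in H0. rewrite sqrt1m_conv_1 in H1.
  destruct (pmul s s) as [|c0 [|c1 r]]; simpl in H0, H1; try lra.
  exists r. subst c0 c1. split; [reflexivity|].
  rewrite pnorm1_nonneg_coefs.
  - simpl in Hval. lra.
  - intro k. change (nth k r 0) with (nth (S (S k)) (1 :: -1 :: r) 0).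
    destruct (Nat.le_gt_cases (S (S k)) N).
    + rewrite Hlow, sqrt1m_conv_ge2 by lia. lra.
    + apply Hhigh; lia.
Qed.

(** * Square roots of nonnegative symmetric operators *)

Section SqrtSeries.
Variable B : op.
Hypotheses (Bl2 : l2_op B) (Blin : lin_op B) (Bbnd : bounded_op B 1) (Bsym : sym_op B).

Fixpoint op_pow (k : nat) (u : nat -> R) : nat -> R :=
  match k with O => u | S j => B (op_pow j u) end.

Lemma op_pow_l2 k : l2_op (op_pow k).
Proof. induction k as [|k IH]; intros u Hu; simpl; auto. Qed.

Lemma op_pow_lin k : lin_op (op_pow k).
Proof.
  induction k as [|k IH]; intros u v a b Hu Hv; simpl; auto.
  rewrite IH by auto. apply Blin; apply op_pow_l2; auto.
Qed.

Lemma op_pow_bounded k : bounded_op (op_pow k) 1.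
Proof.
  induction k as [|k IH]; intros u Hu; simpl; [lra|].
  apply Rle_trans with (1 * l2norm (op_pow k u)); [apply Bbnd, op_pow_l2; auto|].
  rewrite Rmult_1_l. apply IH, Hu.
Qed.

Lemma op_pow_S_r k u : op_pow k (B u) = B (op_pow k u).
Proof. induction k as [|k IH]; simpl; [reflexivity|]. rewrite IH. reflexivity. Qed.

Lemma op_pow_sym k : sym_op (op_pow k).
Proof.
  induction k as [|k IH]; intros u v Hu Hv; simpl; [reflexivity|].
  rewrite Bsym, IH, op_pow_S_r by (try apply op_pow_l2; auto). reflexivity.
Qed.

(* [pev p u] is p(B) u, computed by Horner's rule. *)
Fixpoint pev (p : list R) (u : nat -> R) : nat -> R :=
  match p with
  | nil => fun _ => 0
  | a :: q => fun n => a * u n + B (pev q u) n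
  end.

Lemma pev_l2 p : l2_op (pev p).
Proof.
  induction p as [|a p IH]; intros u Hu; simpl; [apply l2_zero|].
  apply l2_ext with (fun n => a * u n + 1 * B (pev p u) n); [intro; ring|].
  apply l2_lin; auto.
Qed.

Lemma pev_padd p q u : l2 u -> pev (padd p q) u = (fun n => pev p u n + pev q u n).
Proof.
  intro Hu. revert q. induction p as [|a p IH]; intros [|b q]; simpl;
    try (apply functional_extensionality; intro; ring).
  rewrite IH, (lin_op_plus B Blin) by (apply pev_l2; auto).
  apply functional_extensionality; intro; ring.
Qed.

Lemma pev_pscal a p u : l2 u -> pev (pscal a p) u = (fun n => a * pev p u n).
Proof.
  intro Hu. induction p as [|b p IH]; simpl; [apply functional_extensionality; intro; ring|].
  rewrite IH, (lin_op_scal B Blin) by (apply pev_l2; auto).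
  apply functional_extensionality; intro; ring.
Qed.

Lemma pev_pmul p q u : l2 u -> pev (pmul p q) u = pev p (pev q u).
Proof.
  intro Hu. induction p as [|a p IH]; simpl; [reflexivity|].
  rewrite pev_padd, pev_pscal by auto. simpl. rewrite IH.
  apply functional_extensionality; intro; ring.
Qed.

Lemma pev_norm p u : l2 u -> l2norm (pev p u) <= pnorm1 p * l2norm u.
Proof.
  intro Hu. induction p as [|a p IH]; simpl; [rewrite l2norm_zero; lra|].
  rewrite (l2norm_ext _ (fun n => a * u n + 1 * B (pev p u) n)) by (intro; ring).
  eapply Rle_trans; [apply l2norm_lin_le; auto; apply Bl2, pev_l2; auto|].
  rewrite Rabs_R1, Rmult_1_l. pose proof (Bbnd (pev p u) (pev_l2 p u Hu)). lra.
Qed.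

Definition sqrt_partial (N : nat) (u : nat -> R) : nat -> R :=
  fun n => sum_f_R0 (fun k => sqrt1m_coef k * op_pow k u n) N.

Lemma sqrt_partial_0 u : sqrt_partial 0 u = u.
Proof. apply functional_extensionality; intro n. unfold sqrt_partial. simpl. ring. Qed.

Lemma sqrt_partial_l2 N : l2_op (sqrt_partial N).
Proof. intros u Hu. apply l2_sum. intro; apply op_pow_l2, Hu. Qed.

Lemma sqrt_partial_pev N u : l2 u -> sqrt_partial N u = pev (sqrt1m_trunc N) u.
Proof.
  intro Hu. unfold sqrt1m_trunc.
  assert (Hgen : forall j, pev (map sqrt1m_coef (seq j (S N))) u
                 = fun n => sum_f_R0 (fun k => sqrt1m_coef (j + k) * op_pow k u n) N).
  { induction N as [|N IH]; intro j.
    - simpl. rewrite (lin_op_zero B Blin).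
      apply functional_extensionality; intro. rewrite Nat.add_0_r. ring.
    - change (pev (sqrt1m_coef j :: map sqrt1m_coef (seq (S j) (S N))) u
              = fun n => sum_f_R0 (fun k => sqrt1m_coef (j + k) * op_pow k u n) (S N)).
      cbn [pev]. rewrite IH, (lin_op_sum B Blin (fun k => op_pow k u))
        by (intro; apply op_pow_l2; auto).
      apply functional_extensionality; intro n.
      rewrite (decomp_sum _ (S N)) by lia. simpl pred. rewrite Nat.add_0_r.
      f_equal. apply sum_eq. intros i _. rewrite Nat.add_succ_r. reflexivity. }
  rewrite Hgen. reflexivity.
Qed.

Lemma sqrt_partial_sqr N u : (1 <= N)%nat -> l2 u ->
  l2 (fun n => sqrt_partial N (sqrt_partial N u) n - (u n - B u n)) /\
  l2norm (fun n => sqrt_partial N (sqrt_partial N u) n - (u n - B u n))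
    <= sqrt1m_psum N ^ 2 * l2norm u.
Proof.
  intros HN Hu. destruct (sqrt1m_trunc_sqr N HN) as [r [Hsq Hr]].
  assert (Hru : l2 (pev r u)) by (apply pev_l2; auto).
  assert (E : forall n, sqrt_partial N (sqrt_partial N u) n - (u n - B u n) = B (B (pev r u)) n).
  { intro n. rewrite (sqrt_partial_pev N (sqrt_partial N u)) by (apply sqrt_partial_l2; auto).
    rewrite sqrt_partial_pev, <- pev_pmul, Hsq by auto. cbn [pev].
    rewrite (lin_op_plus B Blin), (lin_op_scal B Blin) by (auto; apply l2_scal || apply Bl2; auto).
    ring. }
  split; [apply l2_ext with (B (B (pev r u))); [intro; rewrite E; reflexivity | auto]|].
  rewrite (l2norm_ext _ _ E), <- Hr.
  pose proof (Bbnd (B (pev r u)) (Bl2 _ Hru)). pose proof (Bbnd (pev r u) Hru).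
  pose proof (pev_norm r u Hu). lra.
Qed.

Definition sqrt_series (u : nat -> R) : nat -> R :=
  fun n => Series (fun k => sqrt1m_coef k * op_pow k u n).

Lemma ex_series_sqrt_series u n : l2 u -> ex_series (fun k => sqrt1m_coef k * op_pow k u n).
Proof.
  intro Hu. apply (ex_series_le (V := R_CompleteNormedModule) _
                     (fun k => l2norm u * Rabs (sqrt1m_coef k))).
  - intro k. change norm with Rabs. rewrite Rabs_mult, Rmult_comm.
    apply Rmult_le_compat_r; [apply Rabs_pos|].
    apply Rle_trans with (l2norm (op_pow k u)); [apply Rabs_coord_le_l2norm, op_pow_l2; auto|].
    rewrite <- (Rmult_1_l (l2norm u)). apply op_pow_bounded, Hu.
  - apply (ex_series_scal_l (l2norm u) (fun k => Rabs (sqrt1m_coef k))).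
    apply ex_series_Rabs_sqrt1m_coef.
Qed.

Lemma sqrt_partial_lim u n : l2 u -> is_lim_seq (fun N => sqrt_partial N u n) (sqrt_series u n).
Proof. intro Hu. apply is_series_partial_sums, Series_correct, ex_series_sqrt_series, Hu. Qed.

Lemma sqrt_partial_diff_norm N M u : (N <= M)%nat -> l2 u ->
  l2norm (fun n => sqrt_partial M u n - sqrt_partial N u n)
    <= (sqrt1m_psum N - sqrt1m_psum M) * l2norm u.
Proof.
  intros HNM Hu. induction HNM as [|M HNM IH].
  - rewrite (l2norm_ext _ (fun _ => 0)) by (intro; ring). rewrite l2norm_zero. lra.
  - rewrite (l2norm_ext _ (fun n => 1 * (sqrt_partial M u n - sqrt_partial N u n)
                                   + sqrt1m_coef (S M) * op_pow (S M) u n))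
      by (intro n; unfold sqrt_partial; rewrite tech5; ring).
    eapply Rle_trans.
    { apply l2norm_lin_le; [apply l2_minus; apply sqrt_partial_l2 | apply op_pow_l2]; auto. }
    rewrite Rabs_R1, Rmult_1_l, Rabs_sqrt1m_coef_S.
    pose proof (op_pow_bounded (S M) u Hu). pose proof (sqrt1m_psum_decr M).
    pose proof (l2norm_ge0 (op_pow (S M) u)). nra.
Qed.

Lemma sqrt_series_tail N u : l2 u ->
  l2 (fun n => sqrt_series u n - sqrt_partial N u n) /\
  l2norm (fun n => sqrt_series u n - sqrt_partial N u n) <= sqrt1m_psum N * l2norm u.
Proof.
  intro Hu. pose proof (sqrt1m_psum_pos N). pose proof (l2norm_ge0 u).
  apply (l2norm_pointwise_limit (fun M n => sqrt_partial (M + N) u n - sqrt_partial N u n));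
    [nra| |].
  - intro n. apply is_lim_seq_minus'; [|apply is_lim_seq_const].
    apply (is_lim_seq_incr_n (fun M => sqrt_partial M u n)), sqrt_partial_lim, Hu.
  - intro M. split; [apply l2_minus; apply sqrt_partial_l2; auto|].
    eapply Rle_trans; [apply sqrt_partial_diff_norm; auto; lia|].
    pose proof (sqrt1m_psum_pos (M + N)). nra.
Qed.

Lemma sqrt_series_l2 : l2_op sqrt_series.
Proof.
  intros u Hu. destruct (sqrt_series_tail 0 u Hu) as [H _]. rewrite sqrt_partial_0 in H.
  apply l2_ext with (fun n => (sqrt_series u n - u n) + u n); [intro; ring|].
  apply l2_plus; auto.
Qed.

Lemma sqrt_series_sub_id_norm u : l2 u ->
  l2 (fun n => sqrt_series u n - u n) /\ l2norm (fun n => sqrt_series u n - u n) <= l2norm u.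
Proof.
  intro Hu. pose proof (sqrt_series_tail 0 u Hu) as H.
  rewrite sqrt_partial_0, sqrt1m_psum_0, Rmult_1_l in H. exact H.
Qed.

Lemma sqrt_series_bounded : bounded_op sqrt_series 2.
Proof.
  intros u Hu. destruct (sqrt_series_sub_id_norm u Hu) as [H1 H2].
  rewrite (l2norm_ext _ (fun n => 1 * (sqrt_series u n - u n) + 1 * u n)) by (intro; ring).
  eapply Rle_trans; [apply l2norm_lin_le; auto|]. rewrite Rabs_R1. lra.
Qed.

Lemma sqrt_partial_bounded N : bounded_op (sqrt_partial N) 2.
Proof.
  intros u Hu.
  rewrite (l2norm_ext _ (fun n => 1 * (sqrt_partial N u n - sqrt_partial 0 u n)
                                 + 1 * sqrt_partial 0 u n)) by (intro; ring).
  eapply Rle_trans; [apply l2norm_lin_le; [apply l2_minus|]; apply sqrt_partial_l2; auto|].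
  pose proof (sqrt_partial_diff_norm 0 N u ltac:(lia) Hu).
  rewrite sqrt_partial_0, sqrt1m_psum_0 in *. rewrite Rabs_R1.
  pose proof (sqrt1m_psum_pos N). pose proof (l2norm_ge0 u). nra.
Qed.

Lemma sqrt_series_lin : lin_op sqrt_series.
Proof.
  intros u v a b Hu Hv. apply functional_extensionality; intro n. unfold sqrt_series.
  rewrite (Series_ext _ (fun k => a * (sqrt1m_coef k * op_pow k u n)
                                  + b * (sqrt1m_coef k * op_pow k v n)))
    by (intro k; rewrite op_pow_lin by auto; ring).
  rewrite Series_plus, !Series_scal_l; auto.
  - apply (ex_series_scal_l a (fun k => sqrt1m_coef k * op_pow k u n)).
    apply ex_series_sqrt_series, Hu.
  - apply (ex_series_scal_l b (fun k => sqrt1m_coef k * op_pow k v n)).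
    apply ex_series_sqrt_series, Hv.
Qed.

Lemma sqrt_partial_sym N : sym_op (sqrt_partial N).
Proof.
  intros u v Hu Hv. unfold sqrt_partial.
  rewrite l2inner_sum_l, l2inner_comm, l2inner_sum_l by (auto; intro; apply op_pow_l2; auto).
  apply sum_eq. intros k _. rewrite op_pow_sym, l2inner_comm by auto. reflexivity.
Qed.

Lemma sqrt_series_sym : sym_op sqrt_series.
Proof.
  intros u v Hu Hv. apply Rminus_diag_uniq.
  pose proof (l2norm_ge0 u). pose proof (l2norm_ge0 v).
  apply (Rabs_vanishing _ _ (is_lim_seq_scal_sqrt1m_psum (2 * l2norm u * l2norm v))).
  intro N. destruct (sqrt_series_tail N u Hu) as [Hu1 Hu2].
  destruct (sqrt_series_tail N v Hv) as [Hv1 Hv2].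
  set (du := fun n => sqrt_series u n - sqrt_partial N u n).
  set (dv := fun n => sqrt_series v n - sqrt_partial N v n).
  assert (E : l2inner (sqrt_series u) v - l2inner u (sqrt_series v)
              = l2inner du v - l2inner u dv).
  { unfold du, dv. rewrite l2inner_minus_l, l2inner_minus_r, (sqrt_partial_sym N u v)
      by (first [apply sqrt_series_l2 | apply sqrt_partial_l2 | idtac]; auto).
    ring. }
  rewrite E. eapply Rle_trans; [apply Rabs_triang|]. rewrite Rabs_Ropp.
  pose proof (Rabs_l2inner_le du v Hu1 Hv). pose proof (Rabs_l2inner_le u dv Hu Hv1).
  assert (l2norm du * l2norm v <= sqrt1m_psum N * l2norm u * l2norm v)
    by (apply Rmult_le_compat_r; auto).
  assert (l2norm u * l2norm dv <= l2norm u * (sqrt1m_psum N * l2norm v))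
    by (apply Rmult_le_compat_l; auto).
  lra.
Qed.

Lemma sqrt_series_pos : pos_op sqrt_series.
Proof.
  intros u Hu. destruct (sqrt_series_sub_id_norm u Hu) as [H1 H2].
  replace (l2inner (sqrt_series u) u)
    with (l2inner (fun n => sqrt_series u n - u n) u + l2sqnorm u)
    by (rewrite l2sqnorm_l2inner, l2inner_minus_l by (auto; apply sqrt_series_l2, Hu); ring).
  pose proof (Rabs_l2inner_le _ _ H1 Hu). pose proof (l2norm_ge0 u).
  pose proof (Rle_abs (- l2inner (fun n => sqrt_series u n - u n) u)) as Habs.
  rewrite Rabs_Ropp in Habs. rewrite <- l2norm_sqr by auto. nra.
Qed.

Lemma sqrt_series_sqr u : l2 u -> sqrt_series (sqrt_series u) = (fun n => u n - B u n).
Proof.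
  intro Hu. apply functional_extensionality; intro n. apply Rminus_diag_uniq. revert n.
  pose proof (l2norm_ge0 u) as Hu0.
  apply (l2norm_vanishing _ (fun N => 5 * l2norm u * sqrt1m_psum (S N))).
  { apply l2_minus; [apply sqrt_series_l2, sqrt_series_l2 | apply l2_minus]; auto. }
  { apply (is_lim_seq_incr_1 (fun N => 5 * l2norm u * sqrt1m_psum N)).
    apply is_lim_seq_scal_sqrt1m_psum. }
  intro N. set (M := S N).
  assert (HQu : l2 (sqrt_partial M u)) by (apply sqrt_partial_l2, Hu).
  destruct (sqrt_series_tail M u Hu) as [Hd1 Hd2].
  destruct (sqrt_series_tail M _ HQu) as [He1 He2].
  destruct (sqrt_partial_sqr M u ltac:(unfold M; lia) Hu) as [Hf1 Hf2].
  pose proof (sqrt_partial_bounded M u Hu).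
  set (Qu := sqrt_partial M u) in *.
  set (d := fun n => sqrt_series u n - Qu n) in *.
  set (e := fun n => sqrt_series Qu n - sqrt_partial M Qu n) in *.
  set (f := fun n => sqrt_partial M Qu n - (u n - B u n)) in *.
  assert (Hsd : l2 (sqrt_series d)) by (apply sqrt_series_l2, Hd1).
  rewrite (l2norm_ext _ (fun n => sqrt_series d n + (e n + f n))).
  2:{ intro n. unfold d, e, f. rewrite (lin_op_minus sqrt_series sqrt_series_lin)
        by (try apply sqrt_series_l2; auto). ring. }
  eapply Rle_trans; [apply l2norm_plus_le; auto; apply l2_plus; auto|].
  eapply Rle_trans; [apply Rplus_le_compat_l, l2norm_plus_le; auto|].
  pose proof (sqrt_series_bounded d Hd1).
  pose proof (sqrt1m_psum_pos M). pose proof (sqrt1m_psum_le1 M).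
  assert (sqrt1m_psum M * l2norm Qu <= sqrt1m_psum M * (2 * l2norm u))
    by (apply Rmult_le_compat_l; lra).
  assert (sqrt1m_psum M ^ 2 * l2norm u <= sqrt1m_psum M * l2norm u)
    by (apply Rmult_le_compat_r; nra).
  lra.
Qed.

Lemma sqrt_series_comm (T : op) K : l2_op T -> lin_op T -> bounded_op T K -> 0 <= K ->
  (forall w, l2 w -> T (B w) = B (T w)) ->
  forall u, l2 u -> T (sqrt_series u) = sqrt_series (T u).
Proof.
  intros Tl2 Tlin TK HK TB u Hu.
  assert (Tpow : forall k w, l2 w -> T (op_pow k w) = op_pow k (T w)).
  { induction k as [|k IH]; intros w Hw; simpl; [reflexivity|].
    rewrite TB, IH by (try apply op_pow_l2; auto). reflexivity. }
  assert (TQ : forall N, T (sqrt_partial N u) = sqrt_partial N (T u)).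
  { intro N. unfold sqrt_partial. rewrite (lin_op_sum T Tlin (fun k => op_pow k u))
      by (intro; apply op_pow_l2; auto).
    apply functional_extensionality; intro n. apply sum_eq. intros. rewrite Tpow; auto. }
  assert (HTu := Tl2 u Hu).
  apply functional_extensionality; intro n. apply Rminus_diag_uniq. revert n.
  apply (l2norm_vanishing _
           (fun N => (K * l2norm u + l2norm (T u)) * sqrt1m_psum N)).
  { apply l2_minus; [apply Tl2|]; apply sqrt_series_l2; auto. }
  { apply is_lim_seq_scal_sqrt1m_psum. }
  intro N.
  destruct (sqrt_series_tail N u Hu) as [Hd1 Hd2].
  destruct (sqrt_series_tail N (T u) HTu) as [He1 He2].
  rewrite (l2norm_ext _ (fun n => T (fun m => sqrt_series u m - sqrt_partial N u m) n
                                 - (sqrt_series (T u) n - sqrt_partial N (T u) n))).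
  2:{ intro n. rewrite (lin_op_minus T Tlin), TQ
        by (try apply sqrt_series_l2; try apply sqrt_partial_l2; auto). ring. }
  eapply Rle_trans; [apply l2norm_minus_le; auto|].
  pose proof (TK _ Hd1). pose proof (sqrt1m_psum_pos N).
  assert (K * l2norm (fun n => sqrt_series u n - sqrt_partial N u n)
          <= K * (sqrt1m_psum N * l2norm u)) by (apply Rmult_le_compat_l; auto).
  nra.
Qed.

End SqrtSeries.

(* For y := S x - T x, commutation gives S y + T y = S (S x) - T (T x) = 0; positivity then
   forces S y = T y = 0, and |y|^2 = <x, S y> - <x, T y> = 0. *)
Lemma pos_sqrt_unique (S T : op) :
  l2_op S -> lin_op S -> sym_op S -> pos_op S ->
  l2_op T -> lin_op T -> sym_op T -> pos_op T ->
  (forall u, l2 u -> T (S u) = S (T u)) ->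
  (forall u, l2 u -> S (S u) = T (T u)) ->
  forall x, l2 x -> T x = S x.
Proof.
  intros Sl2 Slin Ssym Spos Tl2 Tlin Tsym Tpos TS SS x Hx.
  set (y := fun n => S x n - T x n).
  assert (Hy : l2 y) by (apply l2_minus; auto).
  assert (Hsum : l2inner (S y) y + l2inner (T y) y = 0).
  { rewrite <- l2inner_plus_l by auto. unfold y.
    rewrite (lin_op_minus S Slin), (lin_op_minus T Tlin), SS, TS by auto.
    replace (fun n => _ + _) with (fun _ : nat => 0)
      by (apply functional_extensionality; intro; cbv beta; ring).
    rewrite l2inner_comm. apply l2inner_0_r. }
  pose proof (Spos y Hy). pose proof (Tpos y Hy).
  assert (Sy : S y = (fun _ => 0)) by (apply pos_op_eq0; auto; lra).
  assert (Ty : T y = (fun _ => 0)) by (apply pos_op_eq0; auto; lra).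
  assert (Hy0 : l2sqnorm y = 0).
  { rewrite l2sqnorm_l2inner. unfold y at 1.
    rewrite l2inner_minus_l, Ssym, Tsym, Sy, Ty, l2inner_0_r by auto. ring. }
  apply functional_extensionality; intro n.
  pose proof (l2sqnorm_eq0 y Hy Hy0 n). unfold y in *. lra.
Qed.

Section ShiftedOperator.
Variables (M : op) (K0 K : R).
Hypotheses (Ml2 : l2_op M) (Mlin : lin_op M) (Msym : sym_op M) (Mpos : pos_op M)
  (MK0 : bounded_op M K0) (HK : 0 < K) (HK0 : K0 <= K).

Definition shifted_op : op := fun u n => u n - / K * M u n.

Lemma shifted_op_l2 : l2_op shifted_op.
Proof.
  intros u Hu. apply l2_ext with (fun n => 1 * u n + (- / K) * M u n);
    [intro; unfold shifted_op; ring|].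
  apply l2_lin; auto.
Qed.

Lemma shifted_op_lin : lin_op shifted_op.
Proof.
  intros u v a b Hu Hv. unfold shifted_op. rewrite Mlin by auto.
  apply functional_extensionality; intro; ring.
Qed.

Lemma shifted_op_l2inner u : l2 u -> l2inner (shifted_op u) u = l2sqnorm u - / K * l2inner (M u) u.
Proof.
  intro Hu. unfold shifted_op.
  rewrite l2inner_minus_l, l2inner_scal_l, l2sqnorm_l2inner by (auto; apply l2_scal; auto).
  reflexivity.
Qed.

Lemma shifted_op_sym : sym_op shifted_op.
Proof.
  intros u v Hu Hv. unfold shifted_op.
  rewrite l2inner_minus_l, l2inner_minus_r, l2inner_scal_l, l2inner_scal_r, Msym
    by (auto; apply l2_scal; auto).
  reflexivity.
Qed.

Lemma shifted_op_pos : pos_op shifted_op.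
Proof.
  intros u Hu. rewrite shifted_op_l2inner by auto.
  pose proof (l2inner_op_le M K0 u Ml2 MK0 Hu). pose proof (l2sqnorm_ge0 u Hu).
  apply Rmult_le_reg_l with K; auto.
  rewrite Rmult_0_r, Rmult_minus_distr_l, <- Rmult_assoc, Rinv_r, Rmult_1_l by lra. nra.
Qed.

Lemma shifted_op_l2inner_le u : l2 u -> l2inner (shifted_op u) u <= l2sqnorm u.
Proof.
  intro Hu. rewrite shifted_op_l2inner by auto. pose proof (Mpos u Hu).
  assert (0 <= / K * l2inner (M u) u)
    by (apply Rmult_le_pos; auto; left; apply Rinv_0_lt_compat; auto).
  lra.
Qed.

(* Cauchy-Schwarz for the nonnegative form <B ., .> gives |B u|^4 <= <B u, u> <B (B u), B u>,
   and both factors are bounded by the corresponding squared norms. *)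
Lemma shifted_op_bounded : bounded_op shifted_op 1.
Proof.
  intros u Hu. set (B := shifted_op). assert (HBu : l2 (B u)) by (apply shifted_op_l2, Hu).
  rewrite Rmult_1_l. apply sqrt_le_1_alt. fold (l2sqnorm (B u)) (l2sqnorm u).
  pose proof (pos_op_cauchy_schwarz B shifted_op_l2 shifted_op_lin shifted_op_sym shifted_op_pos
                u (B u) Hu HBu) as HCS.
  rewrite <- l2sqnorm_l2inner in HCS.
  pose proof (shifted_op_l2inner_le u Hu). pose proof (shifted_op_l2inner_le (B u) HBu).
  pose proof (shifted_op_pos u Hu). pose proof (shifted_op_pos (B u) HBu).
  pose proof (l2sqnorm_ge0 u Hu). pose proof (l2sqnorm_ge0 (B u) HBu).
  assert (l2sqnorm (B u) ^ 2 <= l2sqnorm u * l2sqnorm (B u))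
    by (eapply Rle_trans; [apply HCS | apply Rmult_le_compat; auto]).
  nra.
Qed.

End ShiftedOperator.

Lemma pos_bounded_op_scal (T : op) c : 0 <= c -> pos_bounded_op T ->
  pos_bounded_op (fun u n => c * T u n).
Proof.
  intros Hc [Tl2 [Tlin [[K [HK TK]] [Tsym Tpos]]]].
  split; [|split; [|split; [|split]]].
  - intros u Hu. apply l2_scal, Tl2, Hu.
  - intros u v a b Hu Hv. rewrite Tlin by auto. apply functional_extensionality; intro; ring.
  - exists (c * K). split; [apply Rmult_le_pos; auto|]. intros u Hu.
    rewrite (l2norm_ext _ (fun n => c * T u n + 0 * T u n)) by (intro; ring).
    eapply Rle_trans; [apply l2norm_lin_le; apply Tl2, Hu|].
    rewrite Rabs_R0, Rabs_pos_eq by auto. pose proof (TK u Hu).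
    pose proof (l2norm_ge0 (T u)). nra.
  - intros u v Hu Hv. rewrite l2inner_scal_l, l2inner_scal_r, Tsym by auto. reflexivity.
  - intros u Hu. rewrite l2inner_scal_l. apply Rmult_le_pos; auto.
Qed.

Lemma sqrt_series_pos_bounded (B : op) :
  l2_op B -> lin_op B -> bounded_op B 1 -> sym_op B -> pos_bounded_op (sqrt_series B).
Proof.
  intros Bl2 Blin Bbnd Bsym.
  split; [|split; [|split; [|split]]].
  - apply sqrt_series_l2; auto.
  - apply sqrt_series_lin; auto.
  - exists 2. split; [lra | apply sqrt_series_bounded; auto].
  - apply sqrt_series_sym; auto.
  - apply sqrt_series_pos; auto.
Qed.

Theorem pos_op_sqrt (M : op) K0 : 0 <= K0 ->
  l2_op M -> lin_op M -> bounded_op M K0 -> sym_op M -> pos_op M ->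
  exists S : op, pos_bounded_op S /\ (forall u, l2 u -> S (S u) = M u) /\
    (forall T : op, pos_bounded_op T -> (forall u, l2 u -> T (T u) = M u) ->
       forall u, l2 u -> T u = S u).
Proof.
  intros HK0 Ml2 Mlin MK0 Msym Mpos.
  set (K := K0 + 1). assert (HK : 0 < K) by (unfold K; lra).
  set (B := shifted_op M K).
  assert (Bl2 : l2_op B) by (apply shifted_op_l2; auto).
  assert (Blin : lin_op B) by (apply shifted_op_lin; auto).
  assert (Bbnd : bounded_op B 1) by (apply (shifted_op_bounded M K0); auto; unfold K; lra).
  assert (Bsym : sym_op B) by (apply shifted_op_sym; auto).
  set (S := fun u n => sqrt K * sqrt_series B u n).
  assert (HS : pos_bounded_op S)
    by (apply pos_bounded_op_scal; [apply sqrt_pos | apply sqrt_series_pos_bounded; auto]).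
  assert (SS : forall u, l2 u -> S (S u) = M u).
  { intros u Hu. unfold S. rewrite (lin_op_scal _ (sqrt_series_lin B Bl2 Blin Bbnd)),
      sqrt_series_sqr by (auto; apply sqrt_series_l2; auto).
    apply functional_extensionality; intro n. unfold B, shifted_op.
    rewrite <- Rmult_assoc, sqrt_sqrt by lra. field. lra. }
  exists S. split; [exact HS | split; [exact SS|]].
  intros T [Tl2 [Tlin [[KT [HKT TK]] [Tsym Tpos]]]] TT.
  destruct HS as [Sl2 [Slin [_ [Ssym Spos]]]].
  assert (TM : forall u, l2 u -> T (M u) = M (T u))
    by (intros u Hu; rewrite <- TT, TT by auto; reflexivity).
  assert (TB : forall w, l2 w -> T (B w) = B (T w)).
  { intros w Hw. unfold B, shifted_op.
    replace (fun n => w n - / K * M w n) with (fun n => 1 * w n + (- / K) * M w n)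
      by (apply functional_extensionality; intro; ring).
    rewrite Tlin, TM by auto. apply functional_extensionality; intro; ring. }
  apply (pos_sqrt_unique S T); auto.
  - intros u Hu. unfold S. rewrite (lin_op_scal T Tlin)
      by (apply sqrt_series_l2; auto).
    rewrite (sqrt_series_comm B Bl2 Bbnd T KT) by auto. reflexivity.
  - intros u Hu. rewrite SS, TT by auto. reflexivity.
Qed.

(** * Operators of infinite matrices *)

Definition trunc (N : nat) (u : nat -> R) : nat -> R :=
  fun m => if (m <=? N)%nat then u m else 0.

Definition unit_vec (k : nat) : nat -> R := fun m => if (m =? k)%nat then 1 else 0.

Lemma Series_mult_trunc (h : nat -> R) N (u : nat -> R) :
  Series (fun m => h m * trunc N u m) = sum_f_R0 (fun m => h m * u m) N.
Proof.
  rewrite (Series_finite_support _ N).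
  - apply sum_eq. intros m Hm. unfold trunc. rewrite (proj2 (Nat.leb_le m N) Hm). reflexivity.
  - intros m Hm. unfold trunc. rewrite (proj2 (Nat.leb_gt m N) Hm). ring.
Qed.

Lemma trunc_sqr_le u N m : trunc N u m ^ 2 <= u m ^ 2.
Proof. pose proof (pow2_ge_0 (u m)). unfold trunc. destruct (m <=? N)%nat; simpl; lra. Qed.

Lemma trunc_l2 N u : l2 u -> l2 (trunc N u).
Proof.
  intro Hu. apply (ex_series_le (V := R_CompleteNormedModule) _ (fun m => u m ^ 2)); auto.
  intro m. change norm with Rabs. rewrite Rabs_pos_eq by apply pow2_ge_0. apply trunc_sqr_le.
Qed.

Lemma l2norm_trunc_le N u : l2 u -> l2norm (trunc N u) <= l2norm u.
Proof.
  intro Hu. apply sqrt_le_1_alt, Series_le; auto.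
  intro m. split; [apply pow2_ge_0 | apply trunc_sqr_le].
Qed.

Lemma l2norm_minus_trunc_lim u : l2 u ->
  is_lim_seq (fun N => l2norm (fun m => u m - trunc N u m)) 0.
Proof.
  intro Hu. rewrite <- sqrt_0.
  apply is_lim_seq_continuous; [apply continuity_pt_sqrt; lra|].
  apply is_lim_seq_ext with (fun N => l2sqnorm u - sum_f_R0 (fun m => u m ^ 2) N).
  { intro N. unfold l2sqnorm.
    rewrite (Series_ext (fun m => (u m - trunc N u m) ^ 2)
                        (fun m => u m ^ 2 - u m ^ 2 * trunc N (fun _ => 1) m))
      by (intro m; unfold trunc; destruct (m <=? N)%nat; ring).
    rewrite Series_minus, Series_mult_trunc; auto.
    - f_equal. apply sum_eq. intros; ring.
    - apply (ex_series_le (V := R_CompleteNormedModule) _ (fun m => u m ^ 2)); auto.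
      intro m. change norm with Rabs. pose proof (pow2_ge_0 (u m)).
      unfold trunc. destruct (m <=? N)%nat; rewrite Rabs_pos_eq; lra. }
  replace (Finite 0) with (Finite (l2sqnorm u - l2sqnorm u)) by (f_equal; ring).
  apply is_lim_seq_minus'; [apply is_lim_seq_const|].
  apply is_series_partial_sums, Series_correct, Hu.
Qed.

Lemma sum_mult_unit_vec (h : nat -> R) k N :
  (k <= N)%nat -> sum_f_R0 (fun m => h m * unit_vec k m) N = h k.
Proof.
  induction 1 as [|N HkN IH].
  - destruct k as [|k]; [unfold unit_vec; simpl; ring|].
    rewrite tech5, (sum_eq _ (fun _ => 0)), sum_cte.
    + unfold unit_vec. rewrite Nat.eqb_refl. ring.
    + intros i Hi. unfold unit_vec. rewrite (proj2 (Nat.eqb_neq i (S k))) by lia. ring.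
  - rewrite tech5, IH. unfold unit_vec. rewrite (proj2 (Nat.eqb_neq (S N) k)) by lia. ring.
Qed.

Lemma sum_f_R0_swap (h : nat -> nat -> R) N M :
  sum_f_R0 (fun n => sum_f_R0 (fun m => h n m) M) N
  = sum_f_R0 (fun m => sum_f_R0 (fun n => h n m) N) M.
Proof. induction N as [|N IH]; simpl; [reflexivity|]. rewrite IH, <- plus_sum. reflexivity. Qed.

Definition mat_op (a : nat -> nat -> R) : op := fun u n => Series (fun m => a n m * u m).

Section MatrixOperator.
Variables (a : nat -> nat -> R) (K2 k1 : R).
Hypothesis HK2 : 0 <= K2.
Hypothesis a_sym : forall n m, a n m = a m n.
Hypothesis a_upper : forall (u : nat -> R) N P,
  sum_f_R0 (fun n => (sum_f_R0 (fun m => a n m * u m) N) ^ 2) P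
  <= K2 * sum_f_R0 (fun m => u m ^ 2) N.
Hypothesis a_lower : forall (u : nat -> R) N,
  k1 * sum_f_R0 (fun m => u m ^ 2) N
  <= sum_f_R0 (fun n => u n * sum_f_R0 (fun m => a n m * u m) N) N.

Lemma mat_row_l2 n : l2 (a n).
Proof.
  apply (ex_series_bounded_sums _ K2); [intro; apply pow2_ge_0|]. intro P.
  pose proof (a_upper (unit_vec n) n P) as H.
  rewrite (sum_eq (fun m => unit_vec n m ^ 2) (fun m => 1 * unit_vec n m)),
    sum_mult_unit_vec, Rmult_1_r in H
    by (auto; intros m _; unfold unit_vec; destruct (m =? n)%nat; ring).
  eapply Rle_trans; [|apply H]. right. apply sum_eq. intros k _.
  rewrite sum_mult_unit_vec, a_sym; auto.
Qed.

Lemma ex_series_mat_op u n : l2 u -> ex_series (fun m => a n m * u m).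
Proof. intro Hu. apply ex_series_mult_l2; auto. apply mat_row_l2. Qed.

Lemma mat_op_l2sqnorm u : l2 u -> l2 (mat_op a u) /\ l2sqnorm (mat_op a u) <= K2 * l2sqnorm u.
Proof.
  intro Hu. apply (l2_pointwise_limit (fun N n => sum_f_R0 (fun m => a n m * u m) N)).
  - intro n. apply is_series_partial_sums, Series_correct, ex_series_mat_op, Hu.
  - intros N P. eapply Rle_trans; [apply a_upper|]. apply Rmult_le_compat_l; auto.
    apply (sum_le_Series (fun m => u m ^ 2)); auto. intro; apply pow2_ge_0.
Qed.

Lemma mat_op_l2 : l2_op (mat_op a).
Proof. intros u Hu. apply mat_op_l2sqnorm, Hu. Qed.

Lemma mat_op_bounded : bounded_op (mat_op a) (sqrt K2).
Proof.
  intros u Hu. destruct (mat_op_l2sqnorm u Hu) as [_ H]. unfold l2norm.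
  rewrite <- sqrt_mult by (auto; apply l2sqnorm_ge0, Hu). apply sqrt_le_1_alt, H.
Qed.

Lemma mat_op_lin : lin_op (mat_op a).
Proof.
  intros u v x y Hu Hv. apply functional_extensionality; intro n. unfold mat_op.
  rewrite (Series_ext _ (fun m => x * (a n m * u m) + y * (a n m * v m))) by (intro; ring).
  rewrite Series_plus, !Series_scal_l; auto.
  - apply (ex_series_scal_l x (fun m => a n m * u m)), ex_series_mat_op, Hu.
  - apply (ex_series_scal_l y (fun m => a n m * v m)), ex_series_mat_op, Hv.
Qed.

Lemma l2inner_mat_op_trunc N u v :
  l2inner (mat_op a (trunc N u)) (trunc N v)
  = sum_f_R0 (fun n => v n * sum_f_R0 (fun m => a n m * u m) N) N.
Proof.
  unfold l2inner. rewrite Series_mult_trunc. apply sum_eq. intros n _.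
  unfold mat_op. rewrite Series_mult_trunc. ring.
Qed.

Lemma l2inner_mat_op_trunc_lim u v : l2 u -> l2 v ->
  is_lim_seq (fun N => l2inner (mat_op a (trunc N u)) (trunc N v)) (l2inner (mat_op a u) v).
Proof.
  intros Hu Hv.
  set (du := fun N m => u m - trunc N u m). set (dv := fun N m => v m - trunc N v m).
  set (e := fun N => sqrt K2 * (l2norm (du N) * l2norm v + l2norm u * l2norm (dv N))).
  assert (He : is_lim_seq e 0).
  { replace (Finite 0) with (Finite (sqrt K2 * (0 * l2norm v + l2norm u * 0))) by (f_equal; ring).
    apply is_lim_seq_mult'; [apply is_lim_seq_const|].
    apply is_lim_seq_plus'; apply is_lim_seq_mult';
      try apply is_lim_seq_const; apply l2norm_minus_trunc_lim; auto. }
  assert (Herr : forall N,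
    Rabs (l2inner (mat_op a u) v - l2inner (mat_op a (trunc N u)) (trunc N v)) <= e N).
  { intro N. assert (Htu := trunc_l2 N u Hu). assert (Htv := trunc_l2 N v Hv).
    assert (Hdu : l2 (du N)) by (apply l2_minus; auto).
    assert (Hdv : l2 (dv N)) by (apply l2_minus; auto).
    replace (l2inner (mat_op a u) v - l2inner (mat_op a (trunc N u)) (trunc N v))
      with (l2inner (mat_op a (du N)) v + l2inner (mat_op a (trunc N u)) (dv N)).
    2:{ unfold du, dv. rewrite (lin_op_minus _ mat_op_lin), l2inner_minus_l, l2inner_minus_r
          by (try apply mat_op_l2; auto). ring. }
    eapply Rle_trans; [apply Rabs_triang|].
    pose proof (Rabs_l2inner_le _ _ (mat_op_l2 _ Hdu) Hv).
    pose proof (Rabs_l2inner_le _ _ (mat_op_l2 _ Htu) Hdv).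
    pose proof (mat_op_bounded _ Hdu). pose proof (l2norm_trunc_le N u Hu).
    pose proof (sqrt_pos K2).
    assert (l2norm (mat_op a (trunc N u)) <= sqrt K2 * l2norm u)
      by (eapply Rle_trans; [apply mat_op_bounded; auto | apply Rmult_le_compat_l; auto]).
    pose proof (l2norm_ge0 v). pose proof (l2norm_ge0 (dv N)). pose proof (l2norm_ge0 (trunc N u)).
    assert (l2norm (mat_op a (du N)) * l2norm v <= sqrt K2 * l2norm (du N) * l2norm v)
      by (apply Rmult_le_compat_r; auto).
    assert (l2norm (mat_op a (trunc N u)) * l2norm (dv N) <= sqrt K2 * l2norm u * l2norm (dv N))
      by (apply Rmult_le_compat_r; auto).
    unfold e. lra. }
  apply is_lim_seq_le_le with (u := fun N => l2inner (mat_op a u) v - e N)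
                              (w := fun N => l2inner (mat_op a u) v + e N).
  - intro N. pose proof (Herr N) as HN. apply Rabs_le_between in HN. lra.
  - replace (Finite (l2inner (mat_op a u) v)) with (Finite (l2inner (mat_op a u) v - 0))
      by (f_equal; ring).
    apply is_lim_seq_minus'; [apply is_lim_seq_const | exact He].
  - replace (Finite (l2inner (mat_op a u) v)) with (Finite (l2inner (mat_op a u) v + 0))
      by (f_equal; ring).
    apply is_lim_seq_plus'; [apply is_lim_seq_const | exact He].
Qed.

Lemma mat_op_sym : sym_op (mat_op a).
Proof.
  intros u v Hu Hv.
  assert (Hswap : forall N, l2inner (mat_op a (trunc N u)) (trunc N v)
                           = l2inner (mat_op a (trunc N v)) (trunc N u)).
  { intro N. rewrite !l2inner_mat_op_trunc.
    rewrite (sum_eq _ (fun n => sum_f_R0 (fun m => v n * a n m * u m) N))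
      by (intros; rewrite scal_sum; apply sum_eq; intros; ring).
    rewrite sum_f_R0_swap. apply sum_eq. intros m _. rewrite scal_sum. apply sum_eq.
    intros n _. rewrite a_sym. ring. }
  pose proof (l2inner_mat_op_trunc_lim u v Hu Hv) as Huv.
  pose proof (l2inner_mat_op_trunc_lim v u Hv Hu) as Hvu.
  apply (is_lim_seq_ext _ _ _ Hswap), is_lim_seq_unique in Huv.
  apply is_lim_seq_unique in Hvu. rewrite Huv in Hvu. injection Hvu as E.
  rewrite E. apply l2inner_comm.
Qed.

Lemma mat_op_coercive u : l2 u -> k1 * l2sqnorm u <= l2inner (mat_op a u) u.
Proof.
  intro Hu.
  refine (is_lim_seq_le (fun N => k1 * sum_f_R0 (fun m => u m ^ 2) N)
                        (fun N => l2inner (mat_op a (trunc N u)) (trunc N u))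
                        (k1 * l2sqnorm u) (l2inner (mat_op a u) u) _ _ _).
  - intro N. rewrite l2inner_mat_op_trunc. apply a_lower.
  - apply is_lim_seq_mult'; [apply is_lim_seq_const|].
    apply is_series_partial_sums, Series_correct, Hu.
  - apply l2inner_mat_op_trunc_lim; auto.
Qed.

End MatrixOperator.

Section Diagonal.
Variable c : nat -> R.
Hypotheses (c_pos : forall n, 0 < c n) (c_decr : forall n, c (S n) < c n).

Lemma c_le_c0 n : c n <= c 0%nat.
Proof. induction n as [|n IH]; [lra|]. pose proof (c_decr n). lra. Qed.

Lemma cmul_sqr_le u n : (cmul c u n) ^ 2 <= c 0%nat ^ 2 * u n ^ 2.
Proof.
  unfold cmul. pose proof (c_le_c0 n). pose proof (c_pos n). pose proof (pow2_ge_0 (u n)).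
  rewrite Rpow_mult_distr. apply Rmult_le_compat_r; [auto | apply pow_incr; lra].
Qed.

Lemma cmul_l2 : l2_op (cmul c).
Proof.
  intros u Hu.
  apply (ex_series_le (V := R_CompleteNormedModule) _ (fun n => c 0%nat ^ 2 * u n ^ 2)).
  - intro n. change norm with Rabs. rewrite Rabs_pos_eq by apply pow2_ge_0. apply cmul_sqr_le.
  - apply (ex_series_scal_l (c 0%nat ^ 2) (fun n => u n ^ 2)), Hu.
Qed.

Lemma cmul_bounded : bounded_op (cmul c) (c 0%nat).
Proof.
  intros u Hu. pose proof (c_pos 0).
  unfold l2norm. rewrite <- (sqrt_pow2 (c 0%nat)) by lra.
  rewrite <- sqrt_mult by (apply pow2_ge_0 || apply l2sqnorm_ge0, Hu).
  apply sqrt_le_1_alt. unfold l2sqnorm. rewrite <- Series_scal_l. apply Series_le.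
  - intro n. split; [apply pow2_ge_0 | apply cmul_sqr_le].
  - apply (ex_series_scal_l (c 0%nat ^ 2) (fun n => u n ^ 2)), Hu.
Qed.

End Diagonal.

Lemma cmul_lin c : lin_op (cmul c).
Proof. intros u v x y _ _. apply functional_extensionality; intro; unfold cmul; ring. Qed.

Lemma cmul_sym c : sym_op (cmul c).
Proof. intros u v _ _. apply Series_ext; intro; unfold cmul; ring. Qed.

Definition weighted_mat_op (a : nat -> nat -> R) (c : nat -> R) : op :=
  fun u n => Series (fun m => c n * c m * a n m * u m).

Lemma weighted_mat_op_eq a c u : weighted_mat_op a c u = cmul c (mat_op a (cmul c u)).
Proof.
  apply functional_extensionality; intro n. unfold weighted_mat_op, mat_op, cmul.
  rewrite <- Series_scal_l. apply Series_ext; intro; ring.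
Qed.

Definition weighted_constant (c0 s k1 : R) : R := (1 + c0) ^ 2 * (1 + s) * (1 + / k1).

Lemma weighted_constant_bounds c0 s k1 : 0 <= c0 -> 0 <= s -> 0 < k1 ->
  let C := weighted_constant c0 s k1 in
  1 <= C /\ c0 * s <= C /\ c0 * s * c0 <= C /\ s <= C /\ / C <= k1.
Proof.
  intros Hc0 Hs Hk1 C.
  assert (Hik1 : 0 < / k1) by (apply Rinv_0_lt_compat, Hk1).
  assert (Hprod : 1 + c0 * s * c0 + c0 * s + s <= (1 + c0) ^ 2 * (1 + s)) by nra.
  assert (HC : (1 + c0) ^ 2 * (1 + s) <= C).
  { unfold C, weighted_constant. pose proof (pow2_ge_0 (1 + c0)).
    rewrite <- (Rmult_1_r ((1 + c0) ^ 2 * (1 + s))) at 1.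
    apply Rmult_le_compat_l; [apply Rmult_le_pos; lra | lra]. }
  assert (H1 : 1 <= (1 + c0) ^ 2 * (1 + s)) by nra.
  assert (HCk : 1 + / k1 <= C).
  { unfold C, weighted_constant. rewrite <- (Rmult_1_l (1 + / k1)) at 1.
    apply Rmult_le_compat_r; lra. }
  assert (0 <= c0 * s) by nra. assert (0 <= c0 * s * c0) by nra.
  split; [|split; [|split; [|split]]]; try lra.
  rewrite <- (Rinv_inv k1). apply Rinv_le_contravar; lra.
Qed.

Section WeightedMatrixOperator.
Variables (a : nat -> nat -> R) (c : nat -> R) (K2 k1 : R).
Hypothesis HK2 : 0 <= K2.
Hypothesis a_sym : forall n m, a n m = a m n.
Hypothesis a_upper : forall (u : nat -> R) N P,
  sum_f_R0 (fun n => (sum_f_R0 (fun m => a n m * u m) N) ^ 2) P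
  <= K2 * sum_f_R0 (fun m => u m ^ 2) N.
Hypothesis a_lower : forall (u : nat -> R) N,
  k1 * sum_f_R0 (fun m => u m ^ 2) N
  <= sum_f_R0 (fun n => u n * sum_f_R0 (fun m => a n m * u m) N) N.
Hypotheses (c_pos : forall n, 0 < c n) (c_decr : forall n, c (S n) < c n).
Hypothesis k1_pos : 0 < k1.

Lemma ex_series_weighted_mat_op u n : l2 u -> ex_series (fun m => c n * c m * a n m * u m).
Proof.
  intro Hu.
  assert (E : forall m, c n * (a n m * cmul c u m) = c n * c m * a n m * u m)
    by (intro; unfold cmul; ring).
  apply (ex_series_ext _ _ E).
  apply (ex_series_scal_l (c n) (fun m => a n m * cmul c u m)).
  apply (ex_series_mat_op a K2); auto. apply cmul_l2; auto.
Qed.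

Lemma weighted_mat_op_l2 : l2_op (weighted_mat_op a c).
Proof.
  intros u Hu. rewrite weighted_mat_op_eq.
  apply cmul_l2, (mat_op_l2 a K2), cmul_l2; auto.
Qed.

Lemma weighted_mat_op_lin : lin_op (weighted_mat_op a c).
Proof.
  intros u v x y Hu Hv.
  assert (Hcu := cmul_l2 c c_pos c_decr u Hu). assert (Hcv := cmul_l2 c c_pos c_decr v Hv).
  rewrite !weighted_mat_op_eq, cmul_lin, (mat_op_lin a K2), cmul_lin
    by (try apply (mat_op_l2 a K2); auto).
  reflexivity.
Qed.

Lemma weighted_mat_op_bounded_cmul u : l2 u ->
  l2norm (weighted_mat_op a c u) <= c 0%nat * sqrt K2 * l2norm (cmul c u).
Proof.
  intro Hu. assert (Hcu := cmul_l2 c c_pos c_decr u Hu). pose proof (c_pos 0).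
  rewrite weighted_mat_op_eq.
  eapply Rle_trans; [apply cmul_bounded, (mat_op_l2 a K2); auto|].
  rewrite Rmult_assoc. apply Rmult_le_compat_l; [lra|]. apply (mat_op_bounded a K2); auto.
Qed.

Lemma weighted_mat_op_bounded : bounded_op (weighted_mat_op a c) (c 0%nat * sqrt K2 * c 0%nat).
Proof.
  intros u Hu. eapply Rle_trans; [apply weighted_mat_op_bounded_cmul, Hu|].
  replace (c 0%nat * sqrt K2 * c 0%nat * l2norm u)
    with (c 0%nat * sqrt K2 * (c 0%nat * l2norm u)) by ring.
  apply Rmult_le_compat_l.
  - pose proof (c_pos 0). pose proof (sqrt_pos K2). nra.
  - apply cmul_bounded; auto.
Qed.

Lemma weighted_mat_op_sym : sym_op (weighted_mat_op a c).
Proof.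
  intros u v Hu Hv. rewrite !weighted_mat_op_eq.
  assert (Hcu := cmul_l2 c c_pos c_decr u Hu). assert (Hcv := cmul_l2 c c_pos c_decr v Hv).
  rewrite cmul_sym, (mat_op_sym a K2), <- cmul_sym by (auto; apply (mat_op_l2 a K2); auto).
  reflexivity.
Qed.

Lemma l2inner_weighted_mat_op u : l2 u ->
  l2inner (weighted_mat_op a c u) u = l2inner (mat_op a (cmul c u)) (cmul c u).
Proof.
  intro Hu. rewrite weighted_mat_op_eq. apply cmul_sym; auto.
  apply (mat_op_l2 a K2), cmul_l2; auto.
Qed.

Lemma weighted_mat_op_coercive u : l2 u ->
  k1 * l2norm (cmul c u) ^ 2 <= l2inner (weighted_mat_op a c u) u.
Proof.
  intro Hu. assert (Hcu := cmul_l2 c c_pos c_decr u Hu).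
  rewrite l2inner_weighted_mat_op, l2norm_sqr by auto. apply (mat_op_coercive a K2); auto.
Qed.

Lemma weighted_mat_op_l2inner_le u : l2 u ->
  l2inner (weighted_mat_op a c u) u <= sqrt K2 * l2norm (cmul c u) ^ 2.
Proof.
  intro Hu. assert (Hcu := cmul_l2 c c_pos c_decr u Hu).
  rewrite l2inner_weighted_mat_op, l2norm_sqr by auto.
  apply l2inner_op_le; auto; [apply (mat_op_l2 a K2) | apply (mat_op_bounded a K2)]; auto.
Qed.

Lemma weighted_mat_op_sqrt_bounds (S : op) C : 1 <= C -> / C <= k1 -> sqrt K2 <= C ->
  l2_op S -> sym_op S -> (forall u, l2 u -> S (S u) = weighted_mat_op a c u) ->
  forall u, l2 u -> / C * l2norm (cmul c u) <= l2norm (S u) <= C * l2norm (cmul c u).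
Proof.
  intros HC1 HCk1 HCK2 Sl2 Ssym SS u Hu.
  assert (E : l2norm (S u) ^ 2 = l2inner (weighted_mat_op a c u) u).
  { rewrite l2norm_sqr, l2sqnorm_l2inner, Ssym, SS by auto. apply l2inner_comm. }
  pose proof (weighted_mat_op_coercive u Hu). pose proof (weighted_mat_op_l2inner_le u Hu).
  set (x := l2norm (cmul c u)) in *. set (y := l2norm (S u)) in *.
  assert (Hx : 0 <= x) by apply l2norm_ge0. assert (Hy : 0 <= y) by apply l2norm_ge0.
  assert (HiC : 0 < / C) by (apply Rinv_0_lt_compat; lra).
  assert (HiC1 : / C <= 1) by (rewrite <- Rinv_1; apply Rinv_le_contravar; lra).
  split; apply Rsqr_incr_0_var; rewrite ?Rsqr_pow2; try nra.
  - assert (/ C * / C <= k1) by nra. nra.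
  - assert (sqrt K2 <= C * C) by nra. nra.
Qed.

Lemma weighted_mat_op_props :
  exists C, 0 < C /\
    (forall u, l2 u ->
       (forall n, ex_series (fun m => c n * c m * a n m * u m)) /\
       l2 (weighted_mat_op a c u) /\
       l2norm (weighted_mat_op a c u) <= C * l2norm u /\
       l2norm (weighted_mat_op a c u) <= C * l2norm (cmul c u)) /\
    lin_op (weighted_mat_op a c) /\
    sym_op (weighted_mat_op a c) /\
    (forall u, l2 u -> / C * l2norm (cmul c u) ^ 2 <= l2inner (weighted_mat_op a c u) u) /\
    (exists S : op,
       pos_bounded_op S /\
       (forall u, l2 u -> S (S u) = weighted_mat_op a c u) /\
       (forall T : op, pos_bounded_op T -> (forall u, l2 u -> T (T u) = weighted_mat_op a c u) ->
          forall u, l2 u -> T u = S u) /\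
       (forall u, l2 u -> / C * l2norm (cmul c u) <= l2norm (S u) <= C * l2norm (cmul c u))).
Proof.
  pose proof (c_pos 0%nat) as Hc0. pose proof (sqrt_pos K2).
  destruct (weighted_constant_bounds (c 0%nat) (sqrt K2) k1) as [HC1 [HCa [HCb [HCK2 HCk1]]]];
    [lra | lra | exact k1_pos |].
  set (C := weighted_constant (c 0%nat) (sqrt K2) k1) in *.
  assert (Wpos : pos_op (weighted_mat_op a c)).
  { intros u Hu. eapply Rle_trans; [|apply weighted_mat_op_coercive, Hu].
    apply Rmult_le_pos; [lra | apply pow2_ge_0]. }
  destruct (pos_op_sqrt (weighted_mat_op a c) (c 0%nat * sqrt K2 * c 0%nat)) as [S [HS [SS Suniq]]];
    [nra | apply weighted_mat_op_l2 | apply weighted_mat_op_lin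
    | apply weighted_mat_op_bounded | apply weighted_mat_op_sym | exact Wpos |].
  exists C. split; [lra|]. split; [|split; [|split; [|split]]].
  - intros u Hu. pose proof (l2norm_ge0 u). pose proof (l2norm_ge0 (cmul c u)).
    pose proof (weighted_mat_op_bounded u Hu). pose proof (weighted_mat_op_bounded_cmul u Hu).
    split; [intro n; apply ex_series_weighted_mat_op, Hu|].
    split; [apply weighted_mat_op_l2, Hu|]. split; nra.
  - apply weighted_mat_op_lin.
  - apply weighted_mat_op_sym.
  - intros u Hu. pose proof (weighted_mat_op_coercive u Hu).
    pose proof (pow2_ge_0 (l2norm (cmul c u))). nra.
  - exists S. destruct HS as [Sl2 [Slin [Sbnd [Ssym Spos]]]].
    split; [repeat split; auto | split; [exact SS | split; [exact Suniq|]]].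
    apply weighted_mat_op_sqrt_bounds; auto.
Qed.

End WeightedMatrixOperator.

(** * The Gram matrix of the Sturm-Liouville eigenfunctions *)

Definition continuous_all (h : R -> R) : Prop := forall x, continuous h x.

Lemma continuous_all_mult h1 h2 :
  continuous_all h1 -> continuous_all h2 -> continuous_all (fun x => h1 x * h2 x).
Proof. intros H1 H2 x. apply (continuous_mult h1 h2); auto. Qed.

Lemma continuous_all_const k : continuous_all (fun _ => k).
Proof. intro x. apply continuous_const. Qed.

Lemma continuous_all_sum (h : nat -> R -> R) N :
  (forall m, continuous_all (h m)) -> continuous_all (fun x => sum_f_R0 (fun m => h m x) N).
Proof.
  intro Hh. induction N as [|N IH]; simpl; [apply Hh|].
  intro x. apply (continuous_plus (fun x => sum_f_R0 (fun m => h m x) N)); auto. apply Hh.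
Qed.

Lemma cont_on_cc_of_continuous a b h :
  (forall x, a <= x <= b -> continuous h x) -> cont_on_cc a b h.
Proof.
  intros Hc x Hx eps Heps.
  destruct (proj2 (continuity_pt_filterlim h x) (Hc x Hx) eps Heps) as [d [Hd Hy]].
  exists d. split; auto. intros y _ Hyx.
  destruct (Req_dec x y) as [->|Hne]; [rewrite Rminus_diag, Rabs_R0; lra|].
  apply (Hy y). split; [split; [exact I | auto] | exact Hyx].
Qed.

(* [clamp H] retracts R onto [-H, 0]; composing with it extends functions that are only
   continuous relatively to [-H, 0] to continuous functions on R. *)
Definition clamp (H x : R) : R := Rmax (- H) (Rmin x 0).

Lemma clamp_cases H x : 0 < H ->
  (x < - H /\ clamp H x = - H) \/ (- H <= x <= 0 /\ clamp H x = x) \/ (0 < x /\ clamp H x = 0).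
Proof.
  intro HH. unfold clamp. destruct (Rle_lt_dec x 0).
  - rewrite Rmin_left by auto. destruct (Rle_lt_dec (- H) x).
    + rewrite Rmax_right by auto. right; left. split; auto.
    + rewrite Rmax_left by lra. left. split; auto.
  - rewrite Rmin_right, Rmax_right by lra. right; right. split; auto.
Qed.

Lemma clamp_in H x : 0 < H -> - H <= clamp H x <= 0.
Proof. intro HH. destruct (clamp_cases H x HH) as [[? ->]|[[? ->]|[? ->]]]; lra. Qed.

Lemma clamp_id H x : 0 < H -> - H <= x <= 0 -> clamp H x = x.
Proof. intros HH Hx. destruct (clamp_cases H x HH) as [[? ->]|[[? ->]|[? ->]]]; lra. Qed.

Lemma clamp_lipschitz H x y : 0 < H -> Rabs (clamp H y - clamp H x) <= Rabs (y - x).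
Proof.
  intro HH. destruct (clamp_cases H x HH) as [[? ->]|[[? ->]|[? ->]]];
  destruct (clamp_cases H y HH) as [[? ->]|[[? ->]|[? ->]]];
  unfold Rabs; repeat destruct Rcase_abs; lra.
Qed.

Lemma continuous_all_clamp H p : 0 < H -> cont_on_cc (- H) 0 p ->
  continuous_all (fun x => p (clamp H x)).
Proof.
  intros HH Hc x. apply continuity_pt_filterlim. intros eps Heps.
  destruct (Hc (clamp H x) (clamp_in H x HH) eps Heps) as [d [Hd Hy]].
  exists d. split; auto. intros y [_ Hyx]. simpl in *. unfold R_dist in *.
  apply Hy; [apply clamp_in; auto|]. eapply Rle_lt_trans; [apply clamp_lipschitz; auto | auto].
Qed.

Section IntegralOnSegment.
Variables a b : R.
Hypothesis Hab : a <= b.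

Lemma ex_RInt_continuous_all (h : R -> R) : continuous_all h -> ex_RInt h a b.
Proof. intro Hc. apply (ex_RInt_continuous (V := R_CompleteNormedModule)). intros; apply Hc. Qed.

Lemma RInt_scal_continuous k (h : R -> R) : continuous_all h ->
  RInt (fun r => k * h r) a b = k * RInt h a b.
Proof. intro Hc. apply (RInt_scal h a b k), ex_RInt_continuous_all, Hc. Qed.

Lemma RInt_sum_continuous (h : nat -> R -> R) N : (forall m, continuous_all (h m)) ->
  RInt (fun r => sum_f_R0 (fun m => h m r) N) a b = sum_f_R0 (fun m => RInt (h m) a b) N.
Proof.
  intro Hc. induction N as [|N IH]; simpl; [reflexivity|].
  rewrite <- IH. apply (RInt_plus (fun r => sum_f_R0 (fun m => h m r) N) (h (S N)));
    apply ex_RInt_continuous_all; [apply continuous_all_sum|]; auto.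
Qed.

Lemma RInt_ext_segment (h1 h2 : R -> R) : (forall r, a <= r <= b -> h1 r = h2 r) ->
  RInt h1 a b = RInt h2 a b.
Proof.
  intro E. apply RInt_ext. intros x Hx. rewrite Rmin_left, Rmax_right in Hx by lra.
  apply E. lra.
Qed.

Lemma RInt_le_continuous (h1 h2 : R -> R) : continuous_all h1 -> continuous_all h2 ->
  (forall r, a <= r <= b -> h1 r <= h2 r) -> RInt h1 a b <= RInt h2 a b.
Proof.
  intros H1 H2 Hle. apply RInt_le; auto; try apply ex_RInt_continuous_all; auto.
  intros; apply Hle; lra.
Qed.

End IntegralOnSegment.

Definition gram (H : R) (rho : R -> R) (f : nat -> R -> R) (n m : nat) : R :=
  RInt (fun r => f n r * f m r * rho r) (- H) 0.

Lemma gram_sym H rho f n m : gram H rho f n m = gram H rho f m n.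
Proof.
  assert (E : forall r, f n r * f m r * rho r = f m r * f n r * rho r) by (intro; ring).
  unfold gram. apply RInt_ext. intros r _. apply E.
Qed.

Section SturmLiouvilleGram.
Variables (H g c_low c_up : R) (rho : R -> R) (f : nat -> R -> R).
Hypotheses (HH : 0 < H) (Hg : 0 < g) (Hsm : smooth rho) (Hcl : 0 < c_low).
Hypothesis Hrho : forall r, - H <= r <= 0 -> c_low <= rho r <= c_up.
Hypothesis Hdrho : forall r, - H <= r <= 0 -> c_low <= - Derive rho r.
Hypothesis f_cont : forall n, cont_on_cc (- H) 0 (f n).
Hypothesis f_norm : forall n, RInt (fun r => f n r * f n r * weight g rho r) (- H) 0 = 1.
Hypothesis f_orth : forall n m, n <> m ->
  RInt (fun r => f n r * f m r * weight g rho r) (- H) 0 = 0.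
Hypothesis f_parseval : forall h : R -> R, cont_on_cc (- H) 0 h ->
  is_series (fun n => (RInt (fun r => h r * f n r * weight g rho r) (- H) 0) ^ 2)
            (RInt (fun r => h r ^ 2 * weight g rho r) (- H) 0).

Definition f_ext (n : nat) (x : R) : R := f n (clamp H x).

(* On [-H, 0], [wt] is the weight rho N^2 = - g rho' and [inv_N2] is 1 / N^2 = rho / (rho N^2). *)
Definition wt (r : R) : R := - g * Derive rho r.
Definition inv_N2 (x : R) : R := rho (clamp H x) / wt (clamp H x).

Lemma f_ext_eq n r : - H <= r <= 0 -> f n r = f_ext n r.
Proof. intro Hr. unfold f_ext. rewrite clamp_id; auto. Qed.

Lemma continuous_all_f_ext n : continuous_all (f_ext n).
Proof. apply continuous_all_clamp; auto. Qed.

Lemma continuous_all_rho : continuous_all rho.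
Proof. intro x. exact (ex_derive_continuous (Derive_n rho 0) x (Hsm 0%nat x)). Qed.

Lemma continuous_all_wt : continuous_all wt.
Proof.
  apply continuous_all_mult; [apply continuous_all_const|].
  intro x. exact (ex_derive_continuous (Derive_n rho 1) x (Hsm 1%nat x)).
Qed.

Lemma wt_ge r : - H <= r <= 0 -> g * c_low <= wt r.
Proof. intro Hr. unfold wt. pose proof (Hdrho r Hr). nra. Qed.

Lemma weight_eq r : - H <= r <= 0 -> weight g rho r = wt r.
Proof. intro Hr. unfold weight, N2, wt. pose proof (Hrho r Hr). field. lra. Qed.

Lemma rho_eq r : - H <= r <= 0 -> rho r = inv_N2 r * wt r.
Proof. intro Hr. unfold inv_N2. rewrite clamp_id by auto. pose proof (wt_ge r Hr). field. nra. Qed.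

Lemma continuous_all_inv_N2 : continuous_all inv_N2.
Proof.
  apply continuous_all_clamp with (p := fun x => rho x / wt x); auto.
  apply cont_on_cc_of_continuous. intros x Hx. apply continuity_pt_filterlim.
  apply continuity_pt_div; try apply continuity_pt_filterlim;
    [apply continuous_all_rho | apply continuous_all_wt |].
  pose proof (wt_ge x Hx). nra.
Qed.

Lemma inv_N2_le x : inv_N2 x <= c_up / (g * c_low).
Proof.
  unfold inv_N2. pose proof (clamp_in H x HH) as Hc. set (y := clamp H x) in *.
  pose proof (wt_ge y Hc). pose proof (Hrho y Hc).
  unfold Rdiv. apply Rle_trans with (c_up * / wt y).
  - apply Rmult_le_compat_r; [left; apply Rinv_0_lt_compat; nra | lra].
  - apply Rmult_le_compat_l; [lra | apply Rinv_le_contravar; nra].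
Qed.

Lemma inv_N2_lower : exists q1, 0 < q1 /\ forall x, q1 <= inv_N2 x.
Proof.
  destruct (continuity_ab_maj (fun r => - Derive rho r) (- H) 0) as [xM [HM HxM]]; [lra| |].
  { intros x _. apply continuity_pt_opp, continuity_pt_filterlim.
    exact (ex_derive_continuous (Derive_n rho 1) x (Hsm 1%nat x)). }
  pose proof (Hdrho xM HxM) as HDM.
  exists (c_low / (g * - Derive rho xM)). split; [apply Rdiv_lt_0_compat; nra|].
  intro x. unfold inv_N2. pose proof (clamp_in H x HH) as Hc. set (y := clamp H x) in *.
  pose proof (wt_ge y Hc). pose proof (Hrho y Hc). pose proof (HM y Hc).
  assert (wt y <= g * - Derive rho xM) by (unfold wt; nra).
  unfold Rdiv. apply Rle_trans with (c_low * / wt y).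
  - apply Rmult_le_compat_l; [lra | apply Rinv_le_contravar; nra].
  - apply Rmult_le_compat_r; [left; apply Rinv_0_lt_compat; nra | lra].
Qed.

Lemma RInt_f_ext_orthonormal n m :
  RInt (fun r => f_ext n r * f_ext m r * wt r) (- H) 0 = unit_vec n m.
Proof.
  transitivity (RInt (fun r => f n r * f m r * weight g rho r) (- H) 0).
  - apply RInt_ext_segment; [lra|]. intros r Hr.
    rewrite weight_eq, !(f_ext_eq _ r) by auto. reflexivity.
  - unfold unit_vec. destruct (Nat.eqb_spec m n) as [->|Hmn]; [apply f_norm | apply f_orth; auto].
Qed.

Lemma gram_eq n m :
  gram H rho f n m = RInt (fun r => inv_N2 r * f_ext n r * f_ext m r * wt r) (- H) 0.
Proof.
  apply RInt_ext_segment; [lra|]. intros r Hr. rewrite rho_eq, !(f_ext_eq _ r) by auto. ring.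
Qed.

Definition f_comb (u : nat -> R) (N : nat) (r : R) : R := sum_f_R0 (fun m => u m * f_ext m r) N.

Lemma continuous_all_f_comb u N : continuous_all (f_comb u N).
Proof.
  apply continuous_all_sum. intro m.
  apply continuous_all_mult; [apply continuous_all_const | apply continuous_all_f_ext].
Qed.

Ltac solve_continuous_all :=
  repeat match goal with
  | |- continuous_all (fun r => @?h1 r * @?h2 r) => apply (continuous_all_mult h1 h2)
  | |- continuous_all (fun _ => _) => apply continuous_all_const
  | |- continuous_all (fun r => f_ext _ r) => apply continuous_all_f_ext
  | |- continuous_all (fun r => wt r) => apply continuous_all_wt
  | |- continuous_all (fun r => inv_N2 r) => apply continuous_all_inv_N2
  | |- continuous_all (fun r => f_comb _ _ r) => apply continuous_all_f_comb
  | |- continuous_all (f_ext _) => apply continuous_all_f_ext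
  | |- continuous_all (f_comb _ _) => apply continuous_all_f_comb
  | |- continuous_all wt => apply continuous_all_wt
  | |- continuous_all inv_N2 => apply continuous_all_inv_N2
  | |- continuous_all (fun r => ?G r) => is_var G; unfold G
  | |- continuous_all ?G => is_var G; unfold G
  end.

Lemma RInt_mult_f_comb (h : R -> R) u N : continuous_all h ->
  RInt (fun r => h r * f_comb u N r) (- H) 0
  = sum_f_R0 (fun m => u m * RInt (fun r => h r * f_ext m r) (- H) 0) N.
Proof.
  intro Hh. unfold f_comb.
  rewrite (RInt_ext _ (fun r => sum_f_R0 (fun m => u m * (h r * f_ext m r)) N)).
  2:{ intros r _. rewrite scal_sum. apply sum_eq. intros; ring. }
  rewrite RInt_sum_continuous.
  - apply sum_eq. intros m _. apply RInt_scal_continuous.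
    apply continuous_all_mult; [exact Hh | apply continuous_all_f_ext].
  - intro m. apply continuous_all_mult; [apply continuous_all_const|].
    apply continuous_all_mult; [exact Hh | apply continuous_all_f_ext].
Qed.

Lemma RInt_f_comb_coef u N k : (k <= N)%nat ->
  RInt (fun r => f_ext k r * wt r * f_comb u N r) (- H) 0 = u k.
Proof.
  intro Hk. rewrite RInt_mult_f_comb; [|solve_continuous_all].
  rewrite <- (sum_mult_unit_vec u k N Hk). apply sum_eq. intros m _. f_equal.
  rewrite <- RInt_f_ext_orthonormal. apply RInt_ext_segment; [lra|]. intros; ring.
Qed.

Lemma RInt_f_comb_sqr u N :
  RInt (fun r => f_comb u N r * wt r * f_comb u N r) (- H) 0 = sum_f_R0 (fun m => u m ^ 2) N.
Proof.
  rewrite RInt_mult_f_comb; [|solve_continuous_all].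
  apply sum_eq. intros m Hm. transitivity (u m * u m); [|ring]. f_equal.
  rewrite <- (RInt_f_comb_coef u N m Hm). apply RInt_ext_segment; [lra|]. intros; ring.
Qed.

Lemma RInt_inv_N2_f_comb u N n :
  RInt (fun r => inv_N2 r * f_ext n r * wt r * f_comb u N r) (- H) 0
  = sum_f_R0 (fun m => gram H rho f n m * u m) N.
Proof.
  rewrite RInt_mult_f_comb; [|solve_continuous_all].
  apply sum_eq. intros m _. rewrite gram_eq, Rmult_comm. f_equal.
  apply RInt_ext_segment; [lra|]. intros; ring.
Qed.

Lemma gram_upper (u : nat -> R) N P :
  sum_f_R0 (fun n => (sum_f_R0 (fun m => gram H rho f n m * u m) N) ^ 2) P
  <= (c_up / (g * c_low)) ^ 2 * sum_f_R0 (fun m => u m ^ 2) N.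
Proof.
  set (G := fun r => inv_N2 r * f_comb u N r).
  assert (HG : continuous_all G) by solve_continuous_all.
  pose proof (f_parseval G (cont_on_cc_of_continuous _ _ G (fun x _ => HG x))) as HP.
  rewrite (sum_eq _ (fun n => RInt (fun r => G r * f n r * weight g rho r) (- H) 0 ^ 2)).
  2:{ intros n _. rewrite <- RInt_inv_N2_f_comb. f_equal. apply RInt_ext_segment; [lra|].
      intros r Hr. unfold G. rewrite weight_eq, (f_ext_eq n r) by auto. ring. }
  eapply Rle_trans; [apply sum_le_Series; [intro; apply pow2_ge_0 | eexists; exact HP]|].
  rewrite (is_series_unique _ _ HP), <- RInt_f_comb_sqr, <- RInt_scal_continuous
    by solve_continuous_all.
  rewrite (RInt_ext_segment (- H) 0 ltac:(lra) (fun r => G r ^ 2 * weight g rho r)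
                                              (fun r => G r * G r * wt r))
    by (intros; rewrite weight_eq by auto; ring).
  apply RInt_le_continuous; [lra | solve_continuous_all | solve_continuous_all |].
  intros r Hr. unfold G. destruct inv_N2_lower as [q1 [Hq1 Hq]].
  pose proof (Hq r). pose proof (inv_N2_le r). pose proof (wt_ge r Hr).
  pose proof (pow2_ge_0 (f_comb u N r)).
  assert (inv_N2 r ^ 2 <= (c_up / (g * c_low)) ^ 2) by (apply pow_incr; lra).
  assert (0 < g * c_low) by nra.
  replace (inv_N2 r * f_comb u N r * (inv_N2 r * f_comb u N r) * wt r)
    with (inv_N2 r ^ 2 * (f_comb u N r ^ 2 * wt r)) by ring.
  replace ((c_up / (g * c_low)) ^ 2 * (f_comb u N r * wt r * f_comb u N r))
    with ((c_up / (g * c_low)) ^ 2 * (f_comb u N r ^ 2 * wt r)) by ring.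
  apply Rmult_le_compat_r; [apply Rmult_le_pos; lra | auto].
Qed.

Lemma gram_lower q1 : (forall x, q1 <= inv_N2 x) -> forall (u : nat -> R) N,
  q1 * sum_f_R0 (fun m => u m ^ 2) N
  <= sum_f_R0 (fun n => u n * sum_f_R0 (fun m => gram H rho f n m * u m) N) N.
Proof.
  intros Hq u N.
  replace (sum_f_R0 (fun n => u n * sum_f_R0 (fun m => gram H rho f n m * u m) N) N)
    with (RInt (fun r => inv_N2 r * wt r * f_comb u N r * f_comb u N r) (- H) 0).
  2:{ rewrite RInt_mult_f_comb; [|solve_continuous_all].
      apply sum_eq. intros n _. rewrite <- RInt_inv_N2_f_comb. f_equal.
      apply RInt_ext_segment; [lra|]. intros; ring. }
  rewrite <- RInt_f_comb_sqr, <- RInt_scal_continuous by solve_continuous_all.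
  apply RInt_le_continuous; [lra | solve_continuous_all | solve_continuous_all |].
  intros r Hr. pose proof (Hq r). pose proof (wt_ge r Hr). pose proof (pow2_ge_0 (f_comb u N r)).
  assert (0 < g * c_low) by nra.
  assert (0 <= f_comb u N r * f_comb u N r * wt r) by (apply Rmult_le_pos; nra).
  replace (inv_N2 r * wt r * f_comb u N r * f_comb u N r)
    with (inv_N2 r * (f_comb u N r * wt r * f_comb u N r)) by ring.
  apply Rmult_le_compat_r; [nra | auto].
Qed.

Lemma gram_const_N2 N0 : (forall r, - H <= r <= 0 -> N2 g rho r = N0) ->
  0 < N0 /\ forall n m, gram H rho f n m = unit_vec n m / N0.
Proof.
  intro HN. assert (HN0 : 0 < N0).
  { rewrite <- (HN (- H)) by lra. unfold N2.
    pose proof (Hrho (- H) ltac:(lra)). pose proof (Hdrho (- H) ltac:(lra)).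
    apply Rdiv_lt_0_compat; nra. }
  split; [exact HN0|]. intros n m.
  rewrite <- RInt_f_ext_orthonormal. unfold Rdiv. rewrite Rmult_comm, <- RInt_scal_continuous
    by solve_continuous_all.
  apply RInt_ext_segment; [lra|]. intros r Hr.
  assert (Hw : wt r = N0 * rho r).
  { rewrite <- (HN r Hr). unfold N2, wt. pose proof (Hrho r Hr). field. lra. }
  rewrite !(f_ext_eq _ r), Hw by auto. field. lra.
Qed.

End SturmLiouvilleGram.

Theorem proposition3p2 :
  forall (H g c_low c_up : R) (rho : R -> R) (c : nat -> R) (f : nat -> R -> R),
    0 < H -> 0 < g ->
    smooth rho ->
    0 < c_low -> 0 < c_up ->
    (forall r, - H <= r <= 0 -> c_low <= rho r <= c_up) ->
    (forall r, - H <= r <= 0 -> c_low <= - Derive rho r) ->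
    SL_eigen_family H g rho c f ->
    exists C, 0 < C /\
      (* (i) M is a bounded linear operator on l^2 with |Mu| <= C |(c_n u_n)| *)
      (forall u, l2 u ->
         (forall n, ex_series (fun m => Mentry H rho c f n m * u m)) /\
         l2 (Mop H rho c f u) /\
         l2norm (Mop H rho c f u) <= C * l2norm u /\
         l2norm (Mop H rho c f u) <= C * l2norm (cmul c u)) /\
      (forall u v a b, l2 u -> l2 v ->
         Mop H rho c f (fun n => a * u n + b * v n)
         = (fun n => a * Mop H rho c f u n + b * Mop H rho c f v n)) /\
      (* (ii) symmetry *)
      (forall u v, l2 u -> l2 v ->
         l2inner (Mop H rho c f u) v = l2inner u (Mop H rho c f v)) /\
      (* (iii) coercivity *)
      (forall u, l2 u ->
         / C * (l2norm (cmul c u)) ^ 2 <= l2inner (Mop H rho c f u) u) /\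
      (* (iv) unique positive square root, with two-sided bounds *)
      (exists S : (nat -> R) -> (nat -> R),
         pos_bounded_op S /\
         (forall u, l2 u -> S (S u) = Mop H rho c f u) /\
         (forall T : (nat -> R) -> (nat -> R),
            pos_bounded_op T ->
            (forall u, l2 u -> T (T u) = Mop H rho c f u) ->
            forall u, l2 u -> T u = S u) /\
         (forall u, l2 u ->
            / C * l2norm (cmul c u) <= l2norm (S u) /\
            l2norm (S u) <= C * l2norm (cmul c u))) /\
      (* (v) constant N^2 => M diagonal *)
      (forall N0 : R, (forall r, - H <= r <= 0 -> N2 g rho r = N0) ->
         (forall n, Mentry H rho c f n n = c n ^ 2 / N0) /\
         (forall n m, n <> m -> Mentry H rho c f n m = 0)).
Proof.
  intros H g c_low c_up rho c f HH Hg Hsm Hcl Hcu Hrho Hdrho HSL.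
  destruct HSL as [c_pos [c_decr [f_cont [_ [_ [_ [f_norm [f_orth f_parseval]]]]]]]].
  destruct (inv_N2_lower H g c_low c_up rho HH Hg Hsm Hcl Hrho Hdrho) as [k1 [Hk1 Hk1le]].
  destruct (weighted_mat_op_props (gram H rho f) c ((c_up / (g * c_low)) ^ 2) k1)
    as [C [HC [Hbnd [Hlin [Hsym [Hcoer Hsqrt]]]]]];
    [apply pow2_ge_0 | apply gram_sym
    | intros; apply (gram_upper H g c_low c_up rho f); auto
    | apply (gram_lower H g c_low c_up rho f); auto | auto .. ].
  (* [Mop H rho c f] unfolds to [weighted_mat_op (gram H rho f) c]. *)
  exists C. split; [exact HC|].
  split; [exact Hbnd|]. split; [exact Hlin|]. split; [exact Hsym|].
  split; [exact Hcoer|]. split; [exact Hsqrt|].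
  intros N0 HN.
  destruct (gram_const_N2 H g c_low c_up rho f HH Hg Hsm Hcl Hrho Hdrho f_cont f_norm f_orth N0 HN)
    as [HN0 Hgram].
  split; [intro n | intros n m Hnm]; unfold Mentry.
  - change (RInt _ (- H) 0) with (gram H rho f n n).
    rewrite Hgram. unfold unit_vec. rewrite Nat.eqb_refl. field. lra.
  - change (RInt _ (- H) 0) with (gram H rho f n m).
    rewrite Hgram. unfold unit_vec. rewrite (proj2 (Nat.eqb_neq m n)) by auto. field. lra.
Qed.
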